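(* For $\mathbf{q}, \mathbf{r}\in(\mathbb{Z}_{\ge0})^{n}$ with $n\ge1$, we have \[\frac{d}{d\sigma}f_{\mathbf{q}}^{\mathbf{r}}(\sigma) = i(i\sigma)^{q_{n}}\left(\mathrm{Li}_{1}(e^{i\sigma})\right)^{r_{n}}f_{\mathbf{q}_{-}}^{\mathbf{r}_{-}}(\sigma).\]
   Context: Notation: $|\mathbf{k}|=k_1+\dots+k_n$, $\mathbf{k}_{-}=(k_1,\dots,k_{n-1})$. $\mathrm{Li}_{\mathbf{k}}(z)=\sum_{0<m_1<\dots<m_n} z^{m_n}/(m_1^{k_1}\cdots m_n^{k_n})$, $\mathrm{Li}_\emptyset=1$; $\sigma\in[0,2\pi]$. Let $B_{\mathbf{q}}=\frac{1}{|\mathbf{q}|+n}B_{\mathbf{q}_-}$, $B_\emptyset=1$; $C_{\mathbf{q}}^{\mathbf{j}}=(-1)^{j_n}\frac{(|\mathbf{q}|-|\mathbf{j}_-|)!}{(|\mathbf{q}|-|\mathbf{j}|)!}C_{\mathbf{q}_-}^{\mathbf{j}_-}$, $C_\emptyset^\emptyset=1$. Write $\mathbf{j}\preceq\mathbf{q}$ if $j_1+\dots+j_s\le q_1+\dots+q_s$ for all $s$. Let $\mathfrak{H}=\mathbb{Q}\langle e_0,e_1\rangle$, $\mathfrak{H}^1=\mathbb{Q}+e_1\mathfrak{H}$, with shuffle product $\sqcup\!\sqcup$: $w\sqcup\!\sqcup 1=1\sqcup\!\sqcup w=w$, $u_1w_1\sqcup\!\sqcup u_2w_2=u_1(w_1\sqcup\!\sqcup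 u_2w_2)+u_2(u_1w_1\sqcup\!\sqcup w_2)$ ($u_i\in\{e_0,e_1\}$), $\mathbb{Q}$-bilinear. Define $w_{\mathbf{j}}^{\mathbf{r}}=(w_{\mathbf{j}_-}^{\mathbf{r}_-}\sqcup\!\sqcup e_1^{\sqcup\!\sqcup r_n})e_0^{1+j_n}$, $w_\emptyset^\emptyset=1$ ($e_1^{\sqcup\!\sqcup r}$ = $r$-fold shuffle of $e_1$). $L(\cdot;z):\mathfrak{H}^1\to\mathbb{C}$ is $\mathbb{Q}$-linear with $L(e_1e_0^{k_1-1}\cdots e_1e_0^{k_n-1};z)=\mathrm{Li}_{k_1,\dots,k_n}(z)$, $L(1;z)=1$ (it satisfies $L(w_1;z)L(w_2;z)=L(w_1\sqcup\!\sqcup w_2;z)$). For $\mathbf{q},\mathbf{r}\in(\mathbb{Z}_{\ge0})^n$ write $\mathbf{r}=(\{0\}^{n'},r''_1,\dots,r''_{n''})=(\mathbf{r}',\mathbf{r}'')$ with $r''_1\ge1$, $\mathbf{q}=(\mathbf{q}',\mathbf{q}'')$ with $\mathbf{q}'$ of length $n'$, and $\overline{\mathbf{q}}=(|\mathbf{q}'|+n'+q''_1,q''_2,\dots,q''_{n''})$ (or $\emptyset$ if $\mathbf{q}''=\emptyset$). Define $f_{\mathbf{q}}^{\mathbf{r}}(\sigma)=B_{\mathbf{q}'}\sum_{\mathbf{j}\preceq\overline{\mathbf{q}}}C_{\overline{\mathbf{q}}}^{\mathbf{j}}(i\sigma)^{|\mathbf{q}|+n'-|\mathbf{j}|}L(w_{\mathbf{j}}^{\mathbf{r}''};e^{i\sigma})$,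 sum over $\mathbf{j}\in(\mathbb{Z}_{\ge0})^{n''}$; thus $f_{\emptyset}^{\emptyset}=1$ and $f_{\mathbf{q}}^{\mathbf{r}}(\sigma)=B_{\mathbf{q}}(i\sigma)^{|\mathbf{q}|+n}$ if $\mathbf{r}=(\{0\}^n)$, $n\ge1$. *)

From Stdlib Require Import Reals List Arith.
From Coquelicot Require Import Coquelicot.
Import ListNotations.
Open Scope R_scope.

Fixpoint rsum (n : nat) (F : nat -> R) : R :=
  match n with O => 0 | S n' => rsum n' F + F n' end.
Fixpoint rprod (n : nat) (F : nat -> R) : R :=
  match n with O => 1 | S n' => rprod n' F * F n' end.
Definition Csum (l : list C) : C := fold_right Cplus (RtoC 0) l.

Definition lsum (k : list nat) : nat := fold_right Nat.add 0%nat k.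

(* Ainner k m = sum_{0 < m_1 < ... < m_p < m} 1/(m_1^{k_1} ... m_p^{k_p}),
   k = (k_1,...,k_p); Ainner [] m = 1. *)
Definition Ainner (k : list nat) : nat -> R :=
  fold_left (fun (F : nat -> R) (p : nat) =>
               fun m => rsum m (fun t => if Nat.eqb t 0 then 0
                                         else F t / (INR t) ^ p))
            k (fun _ => 1).

Definition Cseries (u : nat -> C) : C :=
  (Series (fun m => fst (u m)), Series (fun m => snd (u m))).

(* Li_k(z) = sum_{0<m_1<...<m_n} z^{m_n}/(m_1^{k_1}...m_n^{k_n}),
   summed as the limit over m_n of the partial sums; Li_[] = 1. *)
Definition Li (k : list nat) (z : C) : C :=
  match k with
  | [] => RtoC 1
  | _ => Cseries (fun m =>
           Cmult (RtoC (Ainner (List.removelast k) (S m) / (INR (S m)) ^ (List.last k 0%nat)))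
                 (Cpow z (S m)))
  end.

(* a word is a list bool: true = e1, false = e0.  An element of H with
   nonnegative integer coefficients (all elements that occur below) is
   represented by a list of words, i.e. the formal sum of its entries. *)
Fixpoint shuffle (u v : list bool) : list (list bool) :=
  match u with
  | [] => [v]
  | a :: u' =>
      (fix sh2 (v : list bool) : list (list bool) :=
         match v with
         | [] => [u]
         | b :: v' => map (cons a) (shuffle u' v) ++ map (cons b) (sh2 v')
         end) v
  end.

Definition shuffleL (W1 W2 : list (list bool)) : list (list bool) :=
  flat_map (fun u => flat_map (fun v => shuffle u v) W2) W1.

Fixpoint e1sh (r : nat) : list (list bool) :=
  match r with O => [[]] | S r' => shuffleL [[true]] (e1sh r') end.

Definition rmulL (W : list (list bool)) (x : list bool) : list (list bool) :=
  map (fun w => w ++ x) W.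

(* w_j^r = (w_{j-}^{r-} sh e1^{sh r_n}) e0^{1+j_n}, w_[]^[] = 1 *)
Definition wjr (j r : list nat) : list (list bool) :=
  fold_left (fun W (jr : nat * nat) =>
               rmulL (shuffleL W (e1sh (snd jr))) (repeat false (S (fst jr))))
            (combine j r) [[]].

(* index of a word e1 e0^{k1-1} ... e1 e0^{kn-1} is (k1,...,kn) *)
Definition word_index (w : list bool) : list nat :=
  rev (fold_left (fun acc (b : bool) =>
                    if b then (1%nat :: acc)
                    else match acc with [] => [] | k :: acc' => S k :: acc' end)
                 w []).

(* L(.;z) : H^1 -> C, Q-linear, L(e1 e0^{k1-1}...;z) = Li_k(z), L(1;z) = 1 *)
Definition Lmap (W : list (list bool)) (z : C) : C :=
  Csum (map (fun w => Li (word_index w) z) W).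

(* B_q = 1/(|q|+n) B_{q-}, B_[] = 1 *)
Definition Bcoef (q : list nat) : R :=
  rprod (length q) (fun s => / INR (lsum (firstn (S s) q) + S s)).

(* C_q^j = (-1)^{j_n} (|q|-|j_-|)!/(|q|-|j|)! C_{q-}^{j-}, C_[]^[] = 1 *)
Definition Ccoef (q j : list nat) : R :=
  rprod (length q) (fun s =>
    (-1) ^ (nth s j 0%nat) *
    INR (fact (lsum (firstn (S s) q) - lsum (firstn s j))) /
    INR (fact (lsum (firstn (S s) q) - lsum (firstn (S s) j)))).

Definition precb (j q : list nat) : bool :=
  forallb (fun s => Nat.leb (lsum (firstn s j)) (lsum (firstn s q)))
          (seq 0 (S (length q))).

Fixpoint lists_upto (m b : nat) : list (list nat) :=
  match m with
  | O => [[]]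
  | S m' => flat_map (fun x => map (cons x) (lists_upto m' b)) (seq 0 (S b))
  end.

(* { j in N^m : j ⪯ q }  (entries are automatically <= |q|) *)
Definition prec_set (q : list nat) : list (list nat) :=
  filter (fun j => precb j q) (lists_upto (length q) (lsum q)).

Fixpoint lead0 (r : list nat) : nat :=
  match r with 0%nat :: r' => S (lead0 r') | _ => 0%nat end.

Definition Ci : C := (0, 1).
Definition eis (s : R) : C := (cos s, sin s).

Definition qbar (q r : list nat) : list nat :=
  let n' := lead0 r in
  match skipn n' q with
  | [] => []
  | x :: rest => (lsum (firstn n' q) + n' + x)%nat :: rest
  end.

Definition fqr (q r : list nat) (s : R) : C :=
  let n' := lead0 r in
  let r'' := skipn n' r in
  let qb := qbar q r in
  Cmult (RtoC (Bcoef (firstn n' q)))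
    (Csum (map (fun j =>
       Cmult (RtoC (Ccoef qb j))
        (Cmult (Cpow (Cmult Ci (RtoC s)) (lsum q + n' - lsum j))
               (Lmap (wjr j r'') (eis s))))
      (prec_set qb))).

(* On the unit circle minus [1], [L(w; e^{is})] is the sum of a trigonometric series whose
   coefficients are [O(1/sqrt m)] with variation of the same order. Abel summation against the
   bounded partial sums of [cos (m s)] and [sin (m s)] makes these series, and the termwise
   derivatives of [L(W e0; e^{is})], converge locally uniformly in [s], so that
   [d/ds L(W e0; e^{is}) = i L(W; e^{is})]; Abel's theorem carries the shuffle relation
   [L(u ш v) = L(u) L(v)] from the open disc to the circle. Integrating by parts repeatedly,
   [sum_t (-1)^t M!/(M-t)! (is)^(M-t) L(W e0^(t+1); e^{is})] is a primitive of
   [i (is)^M L(W; e^{is})]. Splitting off the last index [j_n] in the sum defining [f_q^r]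
   produces exactly such sums, with [W = w_(j-)^(r-) ш e1^(ш r_n)] and [M = |q| + n' - |j_-|],
   which gives the recursion; when [r] vanishes identically [f_q^r] is a monomial in [s]. *)

From Pilot Require Import Defs.
From Stdlib Require Import Reals List Arith Lra Lia Psatz Permutation.
From Coquelicot Require Import Coquelicot.
Import ListNotations.
Open Scope R_scope.

Lemma rsum_S n F : rsum (S n) F = rsum n F + F n.
Proof. reflexivity. Qed.

Lemma rsum_ext n F G : (forall k, (k < n)%nat -> F k = G k) -> rsum n F = rsum n G.
Proof.
  induction n; intros H; simpl; auto.
  rewrite IHn by (intros; apply H; lia). rewrite H by lia. reflexivity.
Qed.

Lemma rsum_plus n F G : rsum n (fun k => F k + G k) = rsum n F + rsum n G.
Proof. induction n; simpl; [lra|rewrite IHn; lra]. Qed.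

Lemma rsum_scal n a F : rsum n (fun k => a * F k) = a * rsum n F.
Proof. induction n; simpl; [lra|rewrite IHn; lra]. Qed.

Lemma rsum_opp n F : rsum n (fun k => - F k) = - rsum n F.
Proof. induction n; simpl; [lra|rewrite IHn; lra]. Qed.

Lemma rsum_0 n : rsum n (fun _ => 0) = 0.
Proof. induction n; simpl; [lra|rewrite IHn; lra]. Qed.

Lemma rsum_le n F G : (forall k, (k < n)%nat -> F k <= G k) -> rsum n F <= rsum n G.
Proof.
  induction n; intros H; simpl; [lra|].
  assert (rsum n F <= rsum n G) by (apply IHn; intros; apply H; lia).
  assert (F n <= G n) by (apply H; lia). lra.
Qed.

Definition delta0 (m : nat) : R := if Nat.eqb m 0 then 1 else 0.

Lemma rsum_delta0 m : (1 <= m)%nat -> rsum m delta0 = 1.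
Proof.
  induction m; intros H; [lia|]. unfold delta0 in *. destruct m.
  - simpl. lra.
  - rewrite rsum_S, IHm by lia. simpl. lra.
Qed.

Lemma Rabs_rsum_diff_le F G p n :
  (forall m, (p <= m)%nat -> (m < p + n)%nat -> Rabs (F m) <= G m) ->
  Rabs (rsum (p + n) F - rsum p F) <= rsum (p + n) G - rsum p G.
Proof.
  induction n; intros H.
  - rewrite Nat.add_0_r, Rminus_diag, Rabs_R0. lra.
  - replace (p + S n)%nat with (S (p + n)) by lia. rewrite !rsum_S.
    assert (H1 := H (p + n)%nat ltac:(lia) ltac:(lia)).
    assert (H2 := IHn ltac:(intros; apply H; lia)).
    replace (rsum (p + n) F + F (p + n)%nat - rsum p F) with
      ((rsum (p + n) F - rsum p F) + F (p + n)%nat) by ring.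
    eapply Rle_trans; [apply Rabs_triang|]. lra.
Qed.

Lemma rsum_telescope f p n :
  rsum (p + n) (fun m => f m - f (S m)) - rsum p (fun m => f m - f (S m)) = f p - f (p + n)%nat.
Proof.
  induction n.
  - rewrite Nat.add_0_r. ring.
  - replace (p + S n)%nat with (S (p + n)) by lia. rewrite rsum_S.
    set (T := rsum (p + n) (fun m => f m - f (S m))) in *.
    set (T0 := rsum p (fun m => f m - f (S m))) in *.
    replace (T + (f (p + n)%nat - f (S (p + n))) - T0) with
      ((T - T0) + (f (p + n)%nat - f (S (p + n)))) by ring.
    rewrite IHn. ring.
Qed.

Lemma rsum_by_parts (b e : nat -> R) p n :
  rsum (p + n) (fun m => b m * e m) - rsum p (fun m => b m * e m) =
  b (p + n)%nat * (rsum (p + n) e - rsum p e) +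
  (rsum (p + n) (fun m => (b m - b (S m)) * (rsum (S m) e - rsum p e)) -
   rsum p (fun m => (b m - b (S m)) * (rsum (S m) e - rsum p e))).
Proof.
  induction n.
  - rewrite Nat.add_0_r. ring.
  - replace (p + S n)%nat with (S (p + n)) by lia. rewrite !rsum_S.
    set (E := rsum p e) in *.
    set (X := rsum (p + n) (fun m => b m * e m)) in *.
    set (Y := rsum p (fun m => b m * e m)) in *.
    set (Z := rsum (p + n) (fun m => (b m - b (S m)) * (rsum (S m) e - E))) in *.
    set (W := rsum p (fun m => (b m - b (S m)) * (rsum (S m) e - E))) in *.
    simpl rsum.
    replace (X + b (p + n)%nat * e (p + n)%nat - Y) with
      ((X - Y) + b (p + n)%nat * e (p + n)%nat) by ring.
    rewrite IHn. ring.
Qed.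

Lemma rsum_by_parts_bound (b e : nat -> R) p q K :
  (p <= q)%nat ->
  (forall k, (p <= k)%nat -> (k <= q)%nat -> Rabs (rsum k e - rsum p e) <= K) ->
  Rabs (rsum q (fun m => b m * e m) - rsum p (fun m => b m * e m)) <=
  K * (Rabs (b q) + (rsum q (fun m => Rabs (b m - b (S m))) - rsum p (fun m => Rabs (b m - b (S m))))).
Proof.
  intros Hpq HK.
  assert (K0 : 0 <= K).
  { specialize (HK p (le_n p) Hpq). rewrite Rminus_diag, Rabs_R0 in HK. exact HK. }
  replace q with (p + (q - p))%nat by lia.
  rewrite rsum_by_parts.
  eapply Rle_trans; [apply Rabs_triang|].
  rewrite Rmult_plus_distr_l.
  apply Rplus_le_compat.
  - rewrite Rabs_mult.
    assert (Rabs (rsum (p + (q - p)) e - rsum p e) <= K) by (apply HK; lia).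
    assert (0 <= Rabs (b (p + (q - p))%nat)) by apply Rabs_pos. nra.
  - eapply Rle_trans; [apply Rabs_rsum_diff_le with (G := fun m => K * Rabs (b m - b (S m)))|].
    + intros m H1 H2. rewrite Rabs_mult.
      assert (Rabs (rsum (S m) e - rsum p e) <= K) by (apply HK; lia).
      assert (0 <= Rabs (b m - b (S m))) by apply Rabs_pos. nra.
    + rewrite !rsum_scal. lra.
Qed.

Lemma sum_n_rsum F n : sum_n F n = rsum (S n) F.
Proof.
  induction n.
  - rewrite sum_O. simpl. lra.
  - rewrite sum_Sn, IHn. reflexivity.
Qed.

Lemma is_series_iff_lim_rsum u (l : R) : is_series u l <-> is_lim_seq (fun n => rsum n u) l.
Proof.
  split; intros H.
  - apply is_lim_seq_incr_1. eapply filterlim_ext; [|exact H].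
    intros n. simpl. rewrite sum_n_rsum. reflexivity.
  - apply is_lim_seq_incr_1 in H. unfold is_series. eapply filterlim_ext; [|exact H].
    intros n. simpl. rewrite sum_n_rsum. reflexivity.
Qed.

Lemma Series_delta0 a : (forall m, (1 <= m)%nat -> a m = 0) -> Series a = a 0%nat.
Proof.
  intros H. apply is_series_unique, is_series_iff_lim_rsum, is_lim_seq_incr_1.
  eapply is_lim_seq_ext; [|apply is_lim_seq_const]. intros n. symmetry.
  induction n. simpl. ring. rewrite rsum_S, IHn, (H (S n)) by lia. ring.
Qed.

(** * Series with coefficients of order [1/sqrt m] *)

Lemma sqrt_INR_pos m : (1 <= m)%nat -> 0 < sqrt (INR m).
Proof. intros. apply sqrt_lt_R0, lt_0_INR. lia. Qed.

Lemma sqrt_INR_ge1 m : (1 <= m)%nat -> 1 <= sqrt (INR m).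
Proof. intros H. rewrite <- sqrt_1. apply sqrt_le_1_alt, (le_INR 1). auto. Qed.

Lemma inv_sqrt_INR_le p q : (1 <= p)%nat -> (p <= q)%nat -> / sqrt (INR q) <= / sqrt (INR p).
Proof.
  intros H1 H2. apply Rinv_le_contravar; [apply sqrt_INR_pos; auto|].
  apply sqrt_le_1_alt, le_INR. auto.
Qed.

Lemma inv_sqrt_INR_eventually_lt A eps : 0 < eps -> exists N, (1 <= N)%nat /\
  forall n, (N <= n)%nat -> A / sqrt (INR n) < eps.
Proof.
  intros He. destruct (INR_unbounded ((A / eps) ^ 2)) as [N0 HN0].
  exists (max 1 N0). split; [lia|]. intros n Hn.
  assert (Sn : 0 < sqrt (INR n)) by (apply sqrt_INR_pos; lia).
  destruct (Rle_or_lt A 0) as [HA|HA].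
  - unfold Rdiv. assert (0 < / sqrt (INR n)) by (apply Rinv_0_lt_compat; auto). nra.
  - assert (INR N0 <= INR n) by (apply le_INR; lia).
    assert (H2 : sqrt ((A / eps) ^ 2) < sqrt (INR n)).
    { apply sqrt_lt_1_alt. split; [apply pow2_ge_0|lra]. }
    rewrite sqrt_pow2 in H2 by (apply Rlt_le, Rdiv_lt_0_compat; auto).
    apply Rmult_lt_reg_r with (sqrt (INR n)); auto.
    unfold Rdiv in *. rewrite Rmult_assoc, Rinv_l, Rmult_1_r by lra.
    apply Rmult_lt_compat_r with (r := eps) in H2; auto.
    rewrite Rmult_assoc, Rinv_l in H2 by lra. lra.
Qed.

Lemma is_series_of_tail_bound (u : nat -> R) (A : R) :
  (forall p q, (1 <= p)%nat -> (p <= q)%nat -> Rabs (rsum q u - rsum p u) <= A / sqrt (INR p)) ->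
  is_series u (Series u) /\
  forall p, (1 <= p)%nat -> Rabs (Series u - rsum p u) <= A / sqrt (INR p).
Proof.
  intros H.
  assert (Hc : ex_lim_seq_cauchy (fun n => rsum n u)).
  { intros eps. destruct (inv_sqrt_INR_eventually_lt A (eps / 2)) as [N [HN1 HN]].
    { destruct eps; simpl; lra. }
    exists N. intros n m Hn Hm.
    assert (H1 := H N n HN1 Hn). assert (H2 := H N m HN1 Hm).
    assert (H3 := HN N (le_n N)).
    replace (rsum n u - rsum m u) with ((rsum n u - rsum N u) - (rsum m u - rsum N u)) by ring.
    eapply Rle_lt_trans; [apply Rabs_triang|]. rewrite Rabs_Ropp. lra. }
  apply ex_lim_seq_cauchy_corr in Hc. destruct Hc as [l Hl].
  assert (Hs : is_series u l) by (apply is_series_iff_lim_rsum; auto).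
  rewrite (is_series_unique u l Hs). split; auto.
  intros p Hp.
  assert (Hlim : is_lim_seq (fun n => Rabs (rsum n u - rsum p u)) (Rabs (l - rsum p u))).
  { apply (is_lim_seq_abs _ (Finite (l - rsum p u))).
    apply is_lim_seq_minus'; auto. apply is_lim_seq_const. }
  exact (is_lim_seq_le_loc (fun n => Rabs (rsum n u - rsum p u)) (fun _ => A / sqrt (INR p))
     _ _ ltac:(exists p; intros n Hn; apply H; auto) Hlim (is_lim_seq_const _)).
Qed.

Definition sqrt_controlled (c : nat -> R) (C : R) : Prop :=
  forall m, (1 <= m)%nat ->
    Rabs (c m) <= C / sqrt (INR m) /\
    Rabs (c m - c (S m)) <= C * (/ sqrt (INR m) - / sqrt (INR (S m))).

Definition bounded_partial_sums (e : nat -> R) (K : R) : Prop :=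
  forall p k, (p <= k)%nat -> Rabs (rsum k e - rsum p e) <= K.

Lemma sqrt_controlled_nonneg c C : sqrt_controlled c C -> 0 <= C.
Proof.
  intros H. destruct (H 1%nat (le_n 1)) as [H1 _].
  assert (0 < sqrt (INR 1)) by (apply sqrt_INR_pos; lia).
  assert (0 <= C / sqrt (INR 1)) by (eapply Rle_trans; [apply Rabs_pos|exact H1]).
  unfold Rdiv in *. apply Rmult_le_reg_r with (/ sqrt (INR 1)).
  apply Rinv_0_lt_compat; auto. lra.
Qed.

Lemma sqrt_controlled_ext c c' C :
  sqrt_controlled c C -> (forall m, (1 <= m)%nat -> c' m = c m) -> sqrt_controlled c' C.
Proof. intros H E m Hm. rewrite !E by lia. apply H; auto. Qed.

Lemma sqrt_controlled_plus c d C D :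
  sqrt_controlled c C -> sqrt_controlled d D -> sqrt_controlled (fun m => c m + d m) (C + D).
Proof.
  intros H1 H2 m Hm. destruct (H1 m Hm) as [A1 B1]. destruct (H2 m Hm) as [A2 B2].
  split.
  - eapply Rle_trans; [apply Rabs_triang|]. unfold Rdiv in *. lra.
  - replace (c m + d m - (c (S m) + d (S m))) with ((c m - c (S m)) + (d m - d (S m))) by ring.
    eapply Rle_trans; [apply Rabs_triang|]. lra.
Qed.

Lemma sqrt_controlled_bounded c C : sqrt_controlled c C -> forall m, Rabs (c m) <= C + Rabs (c 0%nat).
Proof.
  intros H m. assert (C0 := sqrt_controlled_nonneg c C H). destruct m.
  - lra.
  - destruct (H (S m) ltac:(lia)) as [H1 _].
    assert (1 <= sqrt (INR (S m))) by (apply sqrt_INR_ge1; lia).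
    assert (C / sqrt (INR (S m)) <= C).
    { unfold Rdiv. assert (0 < / sqrt (INR (S m)) <= 1).
      { split. apply Rinv_0_lt_compat; lra. rewrite <- Rinv_1. apply Rinv_le_contravar; lra. }
      nra. }
    assert (0 <= Rabs (c 0%nat)) by apply Rabs_pos. lra.
Qed.

Lemma pow_le_1 t m : 0 <= t <= 1 -> t ^ m <= 1.
Proof.
  intros Ht. induction m; simpl; [lra|].
  assert (0 <= t ^ m) by (apply pow_le; lra). nra.
Qed.

Section RadialTail.

Variables (c e : nat -> R) (C K t : R).
Hypotheses (Hc : sqrt_controlled c C) (He : bounded_partial_sums e K) (Ht : 0 <= t <= 1).

Let b m := c m * t ^ m.

Lemma radial_coef_bound p q : (1 <= p)%nat -> (p <= q)%nat -> Rabs (b q) <= C * / sqrt (INR p).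
Proof.
  intros Hp Hpq. unfold b. rewrite Rabs_mult. destruct (Hc q ltac:(lia)) as [H1 _].
  assert (C0 := sqrt_controlled_nonneg c C Hc).
  assert (Rabs (t ^ q) <= 1) by (rewrite Rabs_pos_eq; [apply pow_le_1|apply pow_le]; lra).
  assert (C / sqrt (INR q) <= C * / sqrt (INR p)).
  { unfold Rdiv. apply Rmult_le_compat_l; auto. apply inv_sqrt_INR_le; auto. }
  apply Rle_trans with (Rabs (c q) * 1); [|lra].
  apply Rmult_le_compat_l; [apply Rabs_pos|auto].
Qed.

Let g p k := C * / sqrt (INR k) + C * / sqrt (INR p) * t ^ k.

(* [c m t^m - c (m+1) t^(m+1) = (c m - c (m+1)) t^(m+1) + c m (t^m - t^(m+1))] *)
Lemma radial_coef_step p m : (1 <= p)%nat -> (p <= m)%nat ->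
  Rabs (b m - b (S m)) <= g p m - g p (S m).
Proof.
  intros Hp Hpm. unfold b, g.
  assert (Ht' : forall m, 0 <= t ^ m <= 1) by (intros; split; [apply pow_le|apply pow_le_1]; lra).
  assert (C0 := sqrt_controlled_nonneg c C Hc).
  replace (c m * t ^ m - c (S m) * t ^ S m) with
    ((c m - c (S m)) * t ^ S m + c m * (t ^ m - t ^ S m)) by (simpl; ring).
  eapply Rle_trans; [apply Rabs_triang|].
  destruct (Hc m ltac:(lia)) as [H3 H4].
  replace (C * / sqrt (INR m) + C * / sqrt (INR p) * t ^ m -
           (C * / sqrt (INR (S m)) + C * / sqrt (INR p) * t ^ S m)) with
    (C * (/ sqrt (INR m) - / sqrt (INR (S m))) + C * / sqrt (INR p) * (t ^ m - t ^ S m)) by ring.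
  apply Rplus_le_compat.
  - rewrite Rabs_mult, (Rabs_pos_eq (t ^ S m)) by apply Ht'.
    apply Rle_trans with (Rabs (c m - c (S m)) * 1); [|lra].
    apply Rmult_le_compat_l; [apply Rabs_pos|apply Ht'].
  - rewrite Rabs_mult.
    assert (0 <= t ^ m - t ^ S m) by (simpl; assert (0 <= t ^ m) by apply Ht'; nra).
    rewrite (Rabs_pos_eq (t ^ m - t ^ S m)) by auto.
    apply Rmult_le_compat_r; auto.
    eapply Rle_trans; [exact H3|]. unfold Rdiv. apply Rmult_le_compat_l; auto.
    apply inv_sqrt_INR_le; lia.
Qed.

Lemma radial_coef_variation p q : (1 <= p)%nat -> (p <= q)%nat ->
  rsum q (fun m => Rabs (b m - b (S m))) - rsum p (fun m => Rabs (b m - b (S m)))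
    <= 2 * C * / sqrt (INR p).
Proof.
  intros Hp Hpq. replace q with (p + (q - p))%nat by lia.
  eapply Rle_trans; [apply (Rle_trans _ _ _ (Rle_abs _)), Rabs_rsum_diff_le|].
  { intros m H1 H2. rewrite Rabs_Rabsolu. apply (radial_coef_step p m); auto. }
  rewrite rsum_telescope. unfold g.
  assert (C0 := sqrt_controlled_nonneg c C Hc).
  assert (0 <= / sqrt (INR (p + (q - p)))) by (apply Rlt_le, Rinv_0_lt_compat, sqrt_INR_pos; lia).
  assert (0 <= t ^ (p + (q - p))) by (apply pow_le; lra).
  assert (t ^ p <= 1) by (apply pow_le_1; lra).
  assert (0 <= C * / sqrt (INR p)) by (apply Rmult_le_pos; auto; apply Rlt_le, Rinv_0_lt_compat, sqrt_INR_pos; auto).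
  nra.
Qed.

Lemma radial_tail_bound p q : (1 <= p)%nat -> (p <= q)%nat ->
  Rabs (rsum q (fun m => c m * t ^ m * e m) - rsum p (fun m => c m * t ^ m * e m))
    <= 3 * C * K / sqrt (INR p).
Proof.
  intros Hp Hpq.
  assert (K0 : 0 <= K) by (specialize (He p p (le_n p)); rewrite Rminus_diag, Rabs_R0 in He; exact He).
  eapply Rle_trans.
  { apply (rsum_by_parts_bound b e p q K Hpq). intros; apply He; auto. }
  assert (B1 := radial_coef_bound p q Hp Hpq).
  assert (B2 := radial_coef_variation p q Hp Hpq).
  unfold Rdiv. rewrite (Rmult_comm (3 * C) K), Rmult_assoc.
  apply Rmult_le_compat_l; auto. lra.
Qed.

Lemma radial_series_tail :
  is_series (fun m => c m * t ^ m * e m) (Series (fun m => c m * t ^ m * e m)) /\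
  forall p, (1 <= p)%nat ->
    Rabs (Series (fun m => c m * t ^ m * e m) - rsum p (fun m => c m * t ^ m * e m))
      <= 3 * C * K / sqrt (INR p).
Proof. apply is_series_of_tail_bound. intros. apply radial_tail_bound; auto. Qed.

End RadialTail.

Lemma sqrt_controlled_series_tail c e C K :
  sqrt_controlled c C -> bounded_partial_sums e K ->
  is_series (fun m => c m * e m) (Series (fun m => c m * e m)) /\
  forall p, (1 <= p)%nat ->
    Rabs (Series (fun m => c m * e m) - rsum p (fun m => c m * e m)) <= 3 * C * K / sqrt (INR p).
Proof.
  intros Hc He. destruct (radial_series_tail c e C K 1 Hc He ltac:(lra)) as [H1 H2].
  assert (E : forall m, c m * 1 ^ m * e m = c m * e m) by (intros; rewrite pow1; ring).
  rewrite (Series_ext _ _ E) in H1, H2. split.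
  - eapply is_series_ext; [exact E|exact H1].
  - intros p Hp. rewrite <- (rsum_ext p (fun m => c m * 1 ^ m * e m)) by auto. auto.
Qed.

Lemma continuity_pt_rsum (F : nat -> R -> R) n x :
  (forall m, continuity_pt (F m) x) -> continuity_pt (fun t => rsum n (fun m => F m t)) x.
Proof.
  intros H. induction n.
  - apply continuity_pt_const. intros a b; reflexivity.
  - apply (continuity_pt_plus (fun t => rsum n (fun m => F m t)) (F n)); auto.
Qed.

(* Abel's theorem: radial limits of the boundary series. *)
Lemma radial_limit c e C K (tn : nat -> R) :
  sqrt_controlled c C -> bounded_partial_sums e K ->
  (forall n, 0 <= tn n <= 1) -> is_lim_seq tn 1 ->
  is_lim_seq (fun n => Series (fun m => c m * tn n ^ m * e m)) (Series (fun m => c m * e m)).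
Proof.
  intros Hc He Ht Hlim.
  rewrite <- (Series_ext (fun m => c m * 1 ^ m * e m)) by (intros; rewrite pow1; ring).
  apply is_lim_seq_spec. intros eps.
  destruct (inv_sqrt_INR_eventually_lt (3 * C * K) (eps / 3)) as [p [Hp1 Hp]].
  { destruct eps; simpl; lra. }
  assert (Hcont : continuity_pt (fun t => rsum p (fun m => c m * t ^ m * e m)) 1).
  { apply (continuity_pt_rsum (fun m t => c m * t ^ m * e m)). intros m.
    apply continuity_pt_mult; [|apply continuity_pt_const; intros a b; reflexivity].
    apply continuity_pt_mult; [apply continuity_pt_const; intros a b; reflexivity|].
    apply derivable_continuous_pt, derivable_pt_pow. }
  assert (HL := is_lim_seq_continuous _ _ _ Hcont Hlim).
  apply is_lim_seq_spec in HL.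
  destruct (HL (mkposreal (eps / 3) ltac:(destruct eps; simpl; lra))) as [N HN].
  exists N. intros n Hn. specialize (HN n Hn). simpl in HN.
  destruct (radial_series_tail c e C K (tn n) Hc He (Ht n)) as [_ B1].
  destruct (radial_series_tail c e C K 1 Hc He ltac:(lra)) as [_ B2].
  specialize (B1 p Hp1). specialize (B2 p Hp1). specialize (Hp p (le_n p)).
  set (A1 := Series (fun m => c m * tn n ^ m * e m)) in *.
  set (A2 := Series (fun m => c m * 1 ^ m * e m)) in *.
  set (P1 := rsum p (fun m => c m * tn n ^ m * e m)) in *.
  set (P2 := rsum p (fun m => c m * 1 ^ m * e m)) in *.
  replace (A1 - A2) with ((A1 - P1) + (P1 - P2) - (A2 - P2)) by ring.
  eapply Rle_lt_trans; [apply Rabs_triang|]. rewrite Rabs_Ropp.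
  assert (Rabs (A1 - P1 + (P1 - P2)) <= Rabs (A1 - P1) + Rabs (P1 - P2)) by apply Rabs_triang.
  lra.
Qed.

Lemma bounded_partial_sums_telescope (e f : nat -> R) b :
  0 < b -> (forall m, 2 * b * e m = f m - f (S m)) -> (forall m, Rabs (f m) <= 1) ->
  bounded_partial_sums e (/ b).
Proof.
  intros Hb Hef Hf p k Hpk. replace k with (p + (k - p))%nat by lia.
  assert (E : 2 * b * (rsum (p + (k - p)) e - rsum p e) = f p - f (p + (k - p))%nat).
  { rewrite Rmult_minus_distr_l, <- !rsum_scal, <- rsum_telescope.
    f_equal; apply rsum_ext; intros; apply Hef. }
  assert (Rabs (2 * b * (rsum (p + (k - p)) e - rsum p e)) <= 2).
  { rewrite E. eapply Rle_trans; [apply Rabs_triang|]. rewrite Rabs_Ropp.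
    assert (H1 := Hf p). assert (H2 := Hf (p + (k - p))%nat). lra. }
  rewrite Rabs_mult, (Rabs_pos_eq (2 * b)) in H by lra.
  apply Rmult_le_reg_l with b; auto. rewrite Rinv_r by lra. lra.
Qed.

Lemma sin_half_pos s : 0 < s < 2 * PI -> 0 < sin (s / 2).
Proof. intros H. apply sin_gt_0; lra. Qed.

Lemma cos_bounded_partial_sums s : 0 < s < 2 * PI ->
  bounded_partial_sums (fun m => cos (INR m * s)) (/ sin (s / 2)).
Proof.
  intros Hs. apply bounded_partial_sums_telescope with (f := fun m => - sin ((INR m - / 2) * s)).
  - apply sin_half_pos; auto.
  - intros m. rewrite S_INR.
    replace ((INR m + 1 - / 2) * s) with (INR m * s + s / 2) by field.
    replace ((INR m - / 2) * s) with (INR m * s - s / 2) by field.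
    rewrite sin_plus, sin_minus. ring.
  - intros m. rewrite Rabs_Ropp. apply Rabs_le, SIN_bound.
Qed.

Lemma sin_bounded_partial_sums s : 0 < s < 2 * PI ->
  bounded_partial_sums (fun m => sin (INR m * s)) (/ sin (s / 2)).
Proof.
  intros Hs. apply bounded_partial_sums_telescope with (f := fun m => cos ((INR m - / 2) * s)).
  - apply sin_half_pos; auto.
  - intros m. rewrite S_INR.
    replace ((INR m + 1 - / 2) * s) with (INR m * s + s / 2) by field.
    replace ((INR m - / 2) * s) with (INR m * s - s / 2) by field.
    rewrite cos_plus, cos_minus. ring.
  - intros m. apply Rabs_le, COS_bound.
Qed.

Lemma sin_ge_sin_half r x : 0 < r <= PI -> r / 2 <= x <= PI - r / 2 -> sin (r / 2) <= sin x.
Proof.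
  intros Hr Hx. assert (PI_pos := PI_RGT_0).
  destruct (Rle_or_lt x (PI / 2)) as [H|H].
  - apply sin_incr_1; lra.
  - rewrite <- (sin_PI_x x). apply sin_incr_1; lra.
Qed.

Lemma circle_ball s0 : 0 < s0 < 2 * PI -> exists r : posreal,
  forall y, Rabs (y - s0) < r -> 0 < y < 2 * PI /\ 0 < sin (r / 2) <= sin (y / 2).
Proof.
  intros Hs0. assert (PI_pos := PI_RGT_0).
  assert (Hr0 : 0 < Rmin s0 (2 * PI - s0) / 2) by (apply Rmin_case; lra).
  exists (mkposreal _ Hr0). simpl. intros y Hy. apply Rabs_def2 in Hy.
  assert (Rmin s0 (2 * PI - s0) <= s0) by apply Rmin_l.
  assert (Rmin s0 (2 * PI - s0) <= 2 * PI - s0) by apply Rmin_r.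
  split; [lra|]. split; [apply sin_gt_0; lra|]. apply sin_ge_sin_half; lra.
Qed.

Lemma locally_circle s0 : 0 < s0 < 2 * PI -> locally s0 (fun s => 0 < s < 2 * PI).
Proof.
  intros Hs. destruct (circle_ball s0 Hs) as [r Hr].
  exists r. intros y Hy. apply Hr, Hy.
Qed.

Lemma derivable_pt_lim_rsum (F F' : nat -> R -> R) n x :
  (forall m, derivable_pt_lim (F m) x (F' m x)) ->
  derivable_pt_lim (fun t => rsum n (fun m => F m t)) x (rsum n (fun m => F' m x)).
Proof.
  intros H. induction n.
  - apply derivable_pt_lim_const.
  - apply (derivable_pt_lim_plus (fun t => rsum n (fun m => F m t)) (F n)); auto.
Qed.

(* The differentiated series converges uniformly near [s0] by the uniform tail bound of
   [sqrt_controlled_series_tail], since [/ sin (y / 2)] stays bounded there. *)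
Lemma derivable_pt_lim_series_termwise (c d : nat -> R) (e e' : nat -> R -> R) C s0 :
  sqrt_controlled c C -> (forall m, d m * INR m = c m) ->
  (forall x, 0 < x < 2 * PI -> bounded_partial_sums (fun m => e m x) (/ sin (x / 2))) ->
  (forall m x, derivable_pt_lim (e' m) x (INR m * e m x)) ->
  (forall x, 0 < x < 2 * PI -> ex_series (fun m => d m * e' m x)) ->
  0 < s0 < 2 * PI ->
  derivable_pt_lim (fun x => Series (fun m => d m * e' m x)) s0 (Series (fun m => c m * e m s0)).
Proof.
  intros Hc Hdc He He' Hser Hs0.
  destruct (circle_ball s0 Hs0) as [r Hr].
  set (K := / sin (r / 2)).
  assert (Hball : forall y, Boule s0 r y -> 0 < y < 2 * PI /\ bounded_partial_sums (fun m => e m y) K).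
  { intros y Hy. destruct (Hr y Hy) as [Hy1 Hy2]. split; auto.
    intros p k Hpk. eapply Rle_trans; [apply He; auto|]. apply Rinv_le_contravar; lra. }
  apply (CVU_derivable (fun n x => rsum n (fun m => d m * e' m x))
                       (fun n x => rsum n (fun m => c m * e m x))
                       (fun x => Series (fun m => d m * e' m x))
                       (fun x => Series (fun m => c m * e m x)) s0 r).
  - intros eps Heps.
    destruct (inv_sqrt_INR_eventually_lt (3 * C * K) eps Heps) as [N [HN1 HN]].
    exists N. intros n y Hn Hy. destruct (Hball y Hy) as [_ Hy'].
    destruct (sqrt_controlled_series_tail c (fun m => e m y) C K Hc Hy') as [_ B].
    eapply Rle_lt_trans; [apply B; lia|]. apply HN; auto.
  - intros x Hx. destruct (Hball x Hx) as [Hx' _]. destruct (Hser x Hx') as [l Hl].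
    apply is_lim_seq_Reals, is_series_iff_lim_rsum. rewrite (is_series_unique _ _ Hl). exact Hl.
  - intros n x Hx.
    apply (derivable_pt_lim_rsum (fun m t => d m * e' m t) (fun m x => c m * e m x)).
    intros m. rewrite <- Hdc, Rmult_assoc. apply derivable_pt_lim_scal, He'.
  - unfold Boule. rewrite Rminus_diag, Rabs_R0. apply cond_pos.
Qed.

Lemma shuffle_nil_r u : shuffle u [] = [u].
Proof. destruct u; reflexivity. Qed.

Lemma shuffle_cons x u y v :
  shuffle (x :: u) (y :: v) = map (cons x) (shuffle u (y :: v)) ++ map (cons y) (shuffle (x :: u) v).
Proof. reflexivity. Qed.

Lemma shuffle_snoc u v a b :
  Permutation (shuffle (u ++ [a]) (v ++ [b]))
    (map (fun w => w ++ [a]) (shuffle u (v ++ [b])) ++ map (fun w => w ++ [b]) (shuffle (u ++ [a]) v)).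
Proof.
  revert v. induction u as [|x u IHu]; intros v.
  - induction v as [|y v IHv].
    + simpl. apply perm_swap.
    + simpl app. rewrite shuffle_cons. simpl app in IHv. simpl shuffle in *. rewrite IHv.
      simpl. rewrite !map_map. apply perm_swap.
  - induction v as [|y v IHv].
    + simpl app. rewrite shuffle_cons, !shuffle_nil_r.
      specialize (IHu []). simpl app in IHu. rewrite IHu, !shuffle_nil_r, !map_app, !map_map.
      rewrite <- !app_assoc. apply Permutation_app_head.
      simpl. rewrite <- !app_assoc. simpl. apply perm_swap.
    + simpl app. rewrite shuffle_cons. simpl app in IHv. rewrite IHv.
      specialize (IHu (y :: v)). simpl app in IHu. rewrite IHu, !map_app, !map_map.
      rewrite <- !app_assoc. apply Permutation_app_head.
      rewrite !app_assoc. apply Permutation_app_tail, Permutation_app_swap.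
Qed.

(* Membership of a word in [H^1 = Q + e1 H]. *)
Definition in_H1 (w : list bool) : Prop := match w with [] => True | b :: _ => b = true end.

Lemma in_H1_snoc w a : in_H1 w -> w <> [] -> in_H1 (w ++ [a]).
Proof. destruct w; simpl; auto. Qed.

Lemma in_H1_snoc_inv w a : in_H1 (w ++ [a]) -> in_H1 w.
Proof. destruct w; simpl; auto. Qed.

Lemma In_shuffle u v w : In w (shuffle u v) ->
  length w = (length u + length v)%nat /\ (in_H1 u -> in_H1 v -> in_H1 w).
Proof.
  revert v w. induction u as [|x u IHu]; intros v w.
  - intros [<-|[]]. simpl; auto.
  - intros Hw; revert w Hw. induction v as [|y v IHv]; intros w.
    + rewrite shuffle_nil_r. intros [<-|[]]. simpl. split; auto. lia.
    + rewrite shuffle_cons. intros Hin. apply in_app_or in Hin.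
      destruct Hin as [Hin|Hin]; apply in_map_iff in Hin; destruct Hin as [w' [<- Hw']].
      * destruct (IHu _ _ Hw') as [H1' _]. simpl in *. split; [lia|auto].
      * destruct (IHv _ Hw') as [H1' _]. simpl in *. split; [lia|auto].
Qed.

Lemma In_shuffle_nonnil u v w : In w (shuffle u v) -> in_H1 u -> in_H1 v ->
  (u <> [] \/ v <> []) -> in_H1 w /\ w <> [].
Proof.
  intros Hw Hu Hv Hne. destruct (In_shuffle _ _ _ Hw) as [Hlen Hh].
  split; auto. intros ->. simpl in Hlen.
  destruct Hne as [Hne|Hne]; [destruct u|destruct v]; try contradiction; simpl in Hlen; lia.
Qed.

(** * Coefficients of the power series [L(w; z)] *)

Definition index_step (acc : list nat) (b : bool) : list nat :=
  if b then (1%nat :: acc) else match acc with [] => [] | k :: acc' => S k :: acc' end.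

Lemma word_index_eq w : word_index w = rev (fold_left index_step w []).
Proof. reflexivity. Qed.

Lemma fold_index_step_nonnil w acc : acc <> [] -> fold_left index_step w acc <> [].
Proof.
  revert acc. induction w as [|b w IH]; intros acc H; simpl; auto.
  apply IH. destruct b; simpl; [discriminate|destruct acc; [contradiction|discriminate]].
Qed.

Lemma fold_index_step_H1_nonnil w : in_H1 w -> w <> [] -> fold_left index_step w [] <> [].
Proof.
  destruct w as [|b w]; [contradiction|]. simpl. intros -> _.
  apply fold_index_step_nonnil. discriminate.
Qed.

Lemma word_index_nonnil w : in_H1 w -> w <> [] -> word_index w <> [].
Proof.
  intros H Hn. rewrite word_index_eq. assert (Hf := fold_index_step_H1_nonnil w H Hn).
  destruct (fold_left index_step w []) as [|k acc]; [contradiction|]. simpl.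
  intros E. destruct (rev acc); discriminate.
Qed.

Lemma word_index_snoc_true w : word_index (w ++ [true]) = word_index w ++ [1%nat].
Proof. rewrite !word_index_eq, fold_left_app. reflexivity. Qed.

Lemma word_index_snoc_false w : in_H1 w -> w <> [] ->
  removelast (word_index (w ++ [false])) = removelast (word_index w) /\
  last (word_index (w ++ [false])) 0%nat = S (last (word_index w) 0%nat).
Proof.
  intros H Hn. rewrite !word_index_eq, fold_left_app.
  assert (Hf := fold_index_step_H1_nonnil w H Hn).
  destruct (fold_left index_step w []) as [|k acc]; [contradiction|].
  simpl. rewrite !removelast_last, !last_last. auto.
Qed.

Definition all_pos (k : list nat) : Prop := List.Forall (fun a => (1 <= a)%nat) k.

Lemma word_index_pos w : all_pos (word_index w).
Proof.
  rewrite word_index_eq. apply Forall_rev.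
  assert (H : forall acc, all_pos acc -> all_pos (fold_left index_step w acc)).
  { induction w as [|b w IH]; intros acc Hacc; simpl; auto.
    apply IH. unfold all_pos in *. destruct b; simpl; [constructor; auto|].
    destruct acc; auto. inversion Hacc; subst. constructor; auto. }
  apply H. constructor.
Qed.

Lemma all_pos_last k : all_pos k -> k <> [] -> (1 <= last k 0)%nat.
Proof.
  intros H Hk. rewrite (app_removelast_last 0%nat Hk) in H. apply Forall_app in H.
  destruct H as [_ H]. inversion H; auto.
Qed.

Definition Ainner_step (F : nat -> R) (p : nat) : nat -> R :=
  fun m => rsum m (fun t => if Nat.eqb t 0 then 0 else F t / (INR t) ^ p).

Lemma Ainner_snoc k p : Ainner (k ++ [p]) = Ainner_step (Ainner k) p.
Proof. unfold Ainner. rewrite fold_left_app. reflexivity. Qed.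

(* [li_coef k m] is the coefficient of [z^m] in [Li_k(z)]; [Li_[] = 1]. *)
Definition li_coef (k : list nat) (m : nat) : R :=
  match k with
  | [] => delta0 m
  | _ => Ainner (removelast k) m / INR m ^ (last k 0%nat)
  end.

Definition word_coef (w : list bool) : nat -> R := li_coef (word_index w).

Definition words_coef (W : list (list bool)) (m : nat) : R :=
  fold_right Rplus 0 (map (fun w => word_coef w m) W).

Lemma li_coef_nonnil k m : k <> [] -> li_coef k m = Ainner (removelast k) m / INR m ^ (last k 0%nat).
Proof. destruct k; [contradiction|reflexivity]. Qed.

Lemma pow0_pos p : (1 <= p)%nat -> 0 ^ p = 0.
Proof. intros. destruct p; [lia|]. simpl. ring. Qed.

Lemma li_coef_0 k : all_pos k -> k <> [] -> li_coef k 0 = 0.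
Proof.
  intros H Hk. rewrite li_coef_nonnil by auto. simpl INR.
  rewrite pow0_pos by (apply all_pos_last; auto). unfold Rdiv. rewrite Rinv_0. ring.
Qed.

Lemma word_coef_0 w : in_H1 w -> w <> [] -> word_coef w 0 = 0.
Proof. intros. apply li_coef_0; [apply word_index_pos|apply word_index_nonnil; auto]. Qed.

Lemma words_coef_cons w W m : words_coef (w :: W) m = word_coef w m + words_coef W m.
Proof. reflexivity. Qed.

Lemma words_coef_app U V m : words_coef (U ++ V) m = words_coef U m + words_coef V m.
Proof.
  induction U; simpl; [unfold words_coef; simpl; ring|].
  rewrite !words_coef_cons, IHU. ring.
Qed.

Lemma words_coef_perm U V m : Permutation U V -> words_coef U m = words_coef V m.
Proof.
  intros H. induction H; auto.
  - rewrite !words_coef_cons, IHPermutation; auto.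
  - rewrite !words_coef_cons. ring.
  - congruence.
Qed.

Lemma words_coef_0 W : (forall w, In w W -> in_H1 w /\ w <> []) -> words_coef W 0 = 0.
Proof.
  induction W as [|w W IH]; intros H; [reflexivity|].
  rewrite words_coef_cons, IH by (intros; apply H; simpl; auto).
  rewrite word_coef_0 by (apply H; simpl; auto). ring.
Qed.

(* Appending [e0] integrates [dz/z] and appending [e1] integrates [dz/(1-z)]; on coefficients,
   multiplying by [m] undoes the first and turns the second into partial sums. *)
Definition letter_coef (a : bool) (c : nat -> R) (m : nat) : R := if a then rsum m c else c m.

Lemma word_coef_snoc_false w m : in_H1 w -> w <> [] ->
  word_coef (w ++ [false]) m * INR m = word_coef w m.
Proof.
  intros H Hn. destruct (word_index_snoc_false w H Hn) as [E1 E2].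
  assert (Hn' : word_index (w ++ [false]) <> []).
  { apply word_index_nonnil. apply in_H1_snoc; auto. destruct w; [contradiction|discriminate]. }
  unfold word_coef. rewrite !li_coef_nonnil by (auto; apply word_index_nonnil; auto).
  rewrite E1, E2. destruct m as [|m].
  - simpl INR. assert (HP := all_pos_last _ (word_index_pos w) (word_index_nonnil w H Hn)).
    rewrite !pow0_pos by lia. unfold Rdiv. rewrite Rinv_0. ring.
  - assert (0 < INR (S m)) by (apply lt_0_INR; lia).
    set (x := INR (S m)) in *. set (p := last (word_index w) 0%nat).
    change (x ^ S p) with (x * x ^ p). field. split; [apply pow_nonzero; lra|lra].
Qed.

Lemma word_coef_snoc_true w m : in_H1 w -> word_coef (w ++ [true]) m * INR m = rsum m (word_coef w).
Proof.
  intros H. unfold word_coef at 1. rewrite word_index_snoc_true.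
  rewrite li_coef_nonnil by (intros E; destruct (word_index w); discriminate).
  rewrite removelast_last, last_last.
  destruct m as [|m]; [simpl; ring|].
  replace (Ainner (word_index w) (S m) / INR (S m) ^ 1 * INR (S m)) with (Ainner (word_index w) (S m))
    by (field; apply not_0_INR; lia).
  unfold word_coef. assert (Hpos := word_index_pos w).
  destruct (word_index w) as [|k0 k] eqn:Ek.
  - symmetry. apply rsum_delta0. lia.
  - set (kk := k0 :: k) in *. assert (Hkk : kk <> []) by discriminate.
    rewrite (app_removelast_last 0%nat Hkk) at 1. rewrite Ainner_snoc. unfold Ainner_step.
    apply rsum_ext. intros [|t] Ht.
    + rewrite (li_coef_0 kk) by auto. reflexivity.
    + rewrite li_coef_nonnil by auto. reflexivity.
Qed.

Lemma word_coef_snoc w a m : in_H1 w -> in_H1 (w ++ [a]) ->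
  word_coef (w ++ [a]) m * INR m = letter_coef a (word_coef w) m.
Proof.
  intros H H'. destruct a; simpl.
  - apply word_coef_snoc_true; auto.
  - apply word_coef_snoc_false; auto. intros ->. simpl in H'. discriminate.
Qed.

Lemma words_coef_snoc a W m :
  (forall w, In w W -> in_H1 w /\ in_H1 (w ++ [a])) ->
  words_coef (map (fun w => w ++ [a]) W) m * INR m = letter_coef a (words_coef W) m.
Proof.
  intros H. induction W as [|w W IH].
  - unfold words_coef. destruct a; simpl; [rewrite rsum_0|]; ring.
  - rewrite map_cons, !words_coef_cons, Rmult_plus_distr_r.
    rewrite IH by (intros; apply H; simpl; auto).
    rewrite word_coef_snoc by (apply H; simpl; auto).
    destruct a; simpl; [rewrite <- rsum_plus|]; reflexivity.
Qed.

Definition conv (c d : nat -> R) (m : nat) : R := sum_f_R0 (fun k => c k * d (m - k)%nat) m.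

Lemma conv_delta0_l d m : conv delta0 d m = d m.
Proof.
  unfold conv, delta0. destruct m; [simpl; ring|].
  rewrite decomp_sum by lia. simpl. rewrite sum_eq_R0; [ring|]. intros. simpl. ring.
Qed.

Lemma conv_delta0_r c m : conv c delta0 m = c m.
Proof.
  unfold conv, delta0. destruct m; [simpl; ring|].
  rewrite tech5, Nat.sub_diag, sum_eq_R0; [simpl; ring|].
  intros n Hn. replace (Nat.eqb (S m - n) 0) with false; [ring|].
  symmetry. apply Nat.eqb_neq. lia.
Qed.

Lemma conv_partial_sums_l c d m :
  sum_f_R0 (fun k => rsum k c * d (m - k)%nat) m = rsum m (conv c d).
Proof.
  induction m; [simpl; ring|].
  rewrite decomp_sum by lia. simpl pred. rewrite rsum_S, <- IHm.
  unfold conv. change (rsum 0 c) with 0. rewrite Rmult_0_l, Rplus_0_l, <- sum_plus.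
  apply sum_eq. intros i Hi. replace (S m - S i)%nat with (m - i)%nat by lia. simpl. ring.
Qed.

Lemma conv_partial_sums_r c d m :
  sum_f_R0 (fun k => c k * rsum (m - k)%nat d) m = rsum m (conv c d).
Proof.
  induction m; [simpl; ring|].
  rewrite tech5, rsum_S, <- IHm. unfold conv.
  rewrite Nat.sub_diag. change (rsum 0 d) with 0. rewrite Rmult_0_r, Rplus_0_r, <- sum_plus.
  apply sum_eq. intros i Hi. replace (S m - i)%nat with (S (m - i)) by lia. rewrite rsum_S. ring.
Qed.

Lemma letter_coef_conv_l a c d m :
  sum_f_R0 (fun k => letter_coef a c k * d (m - k)%nat) m = letter_coef a (conv c d) m.
Proof. destruct a; [apply conv_partial_sums_l|reflexivity]. Qed.

Lemma letter_coef_conv_r b c d m :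
  sum_f_R0 (fun k => c k * letter_coef b d (m - k)%nat) m = letter_coef b (conv c d) m.
Proof. destruct b; [apply conv_partial_sums_r|reflexivity]. Qed.

(* Leibniz rule: [m = k + (m - k)] splits the weighted convolution in two. *)
Lemma conv_mul_index c d c' d' a b m :
  (forall k, c k * INR k = letter_coef a c' k) -> (forall k, d k * INR k = letter_coef b d' k) ->
  conv c d m * INR m = letter_coef a (conv c' d) m + letter_coef b (conv c d') m.
Proof.
  intros Hc Hd. rewrite <- letter_coef_conv_l, <- letter_coef_conv_r.
  unfold conv. rewrite (Rmult_comm _ (INR m)), scal_sum, <- sum_plus.
  apply sum_eq. intros k Hk. rewrite <- Hc, <- Hd, minus_INR by lia. ring.
Qed.

Lemma words_coef_shuffle_le N : forall u v, (length u + length v <= N)%nat -> in_H1 u -> in_H1 v ->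
  forall m, words_coef (shuffle u v) m = conv (word_coef u) (word_coef v) m.
Proof.
  induction N as [|N IH]; intros u v Hl Hu Hv m.
  { destruct u; [|simpl in Hl; lia]. destruct v; [|simpl in Hl; lia].
    unfold words_coef. simpl. rewrite Rplus_0_r. symmetry. apply conv_delta0_l. }
  destruct u as [|x u0] eqn:Eu.
  { unfold words_coef. simpl. rewrite Rplus_0_r. symmetry. apply conv_delta0_l. }
  destruct v as [|y v0] eqn:Ev.
  { unfold words_coef. rewrite shuffle_nil_r. simpl. rewrite Rplus_0_r. symmetry. apply conv_delta0_r. }
  rewrite <- Eu, <- Ev in *.
  assert (Hun : u <> []) by (rewrite Eu; discriminate).
  assert (Hvn : v <> []) by (rewrite Ev; discriminate).
  destruct (exists_last Hun) as [u' [a Eua]]. destruct (exists_last Hvn) as [v' [b Evb]].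
  clear x u0 Eu y v0 Ev.
  assert (Hu' : in_H1 u') by (apply (in_H1_snoc_inv u' a); rewrite <- Eua; auto).
  assert (Hv' : in_H1 v') by (apply (in_H1_snoc_inv v' b); rewrite <- Evb; auto).
  destruct m as [|m].
  { rewrite words_coef_0 by (intros w Hw; apply (In_shuffle_nonnil u v); auto).
    unfold conv. simpl. rewrite word_coef_0 by auto. ring. }
  apply Rmult_eq_reg_r with (INR (S m)); [|apply not_0_INR; lia].
  assert (Lu : length u = S (length u')) by (rewrite Eua, length_app; simpl; lia).
  assert (Lv : length v = S (length v')) by (rewrite Evb, length_app; simpl; lia).
  assert (Hsh_u : forall w, In w (shuffle u' v) -> in_H1 w /\ in_H1 (w ++ [a])).
  { intros w Hw. destruct (In_shuffle_nonnil u' v w Hw Hu' Hv (or_intror Hvn)).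
    split; auto. apply in_H1_snoc; auto. }
  assert (Hsh_v : forall w, In w (shuffle u v') -> in_H1 w /\ in_H1 (w ++ [b])).
  { intros w Hw. destruct (In_shuffle_nonnil u v' w Hw Hu Hv' (or_introl Hun)).
    split; auto. apply in_H1_snoc; auto. }
  rewrite Eua at 1. rewrite Evb at 1.
  rewrite (words_coef_perm _ _ _ (shuffle_snoc u' v' a b)), words_coef_app, <- Eua, <- Evb.
  rewrite Rmult_plus_distr_r, (words_coef_snoc a), (words_coef_snoc b) by auto.
  rewrite (conv_mul_index _ _ (word_coef u') (word_coef v') a b).
  - f_equal; unfold letter_coef; [destruct a|destruct b];
      try apply rsum_ext; intros; apply IH; auto; lia.
  - intros k. rewrite Eua. apply word_coef_snoc; [exact Hu'|rewrite <- Eua; exact Hu].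
  - intros k. rewrite Evb. apply word_coef_snoc; [exact Hv'|rewrite <- Evb; exact Hv].
Qed.

Lemma words_coef_shuffle u v m : in_H1 u -> in_H1 v ->
  words_coef (shuffle u v) m = conv (word_coef u) (word_coef v) m.
Proof. intros. apply (words_coef_shuffle_le (length u + length v)); auto. Qed.

(** * Size of the coefficients *)

Lemma Ainner_nonneg k m : 0 <= Ainner k m.
Proof.
  revert m. induction k as [|p k IH] using rev_ind; intros m.
  - unfold Ainner. simpl. lra.
  - rewrite Ainner_snoc. unfold Ainner_step. induction m; simpl; [lra|].
    destruct (Nat.eqb m 0) eqn:E; [lra|]. apply Nat.eqb_neq in E.
    assert (0 < INR m ^ p) by (apply pow_lt, lt_0_INR; lia).
    assert (0 <= Ainner k m / INR m ^ p) by (apply Rdiv_le_0_compat; auto). lra.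
Qed.

Lemma Ainner_step_increment F p m : (1 <= m)%nat ->
  Ainner_step F p (S m) - Ainner_step F p m = F m / INR m ^ p.
Proof.
  intros H. unfold Ainner_step. rewrite rsum_S.
  destruct (Nat.eqb m 0) eqn:E; [apply Nat.eqb_eq in E; lia|]. ring.
Qed.

Lemma rsum_inv_sqrt_le m :
  rsum m (fun t => if Nat.eqb t 0 then 0 else / sqrt (INR t)) <= 2 * sqrt (INR m).
Proof.
  assert (HS : forall n, rsum (S n) (fun t => if Nat.eqb t 0 then 0 else / sqrt (INR t))
                         <= 2 * sqrt (INR n)).
  { induction n.
    - simpl. rewrite sqrt_0. lra.
    - rewrite rsum_S. simpl Nat.eqb. cbv iota.
      set (a := sqrt (INR (S n))). set (b := sqrt (INR n)) in *.
      assert (Hb : 0 <= b) by apply sqrt_pos.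
      assert (Ha : 0 < a) by (apply sqrt_INR_pos; lia).
      assert (Ea : a * a = b * b + 1).
      { unfold a, b. rewrite !sqrt_sqrt by (try apply pos_INR). rewrite S_INR. ring. }
      assert (/ a <= 2 * (a - b)).
      { apply Rmult_le_reg_r with a; auto. rewrite Rinv_l by lra. nra. }
      lra. }
  destruct m as [|m]; [simpl; rewrite sqrt_0; lra|].
  eapply Rle_trans; [apply HS|].
  assert (sqrt (INR m) <= sqrt (INR (S m))) by (apply sqrt_le_1_alt, le_INR; lia). lra.
Qed.

Lemma pow_ge_self x p : 1 <= x -> (1 <= p)%nat -> x <= x ^ p.
Proof.
  intros Hx Hp. induction p; [lia|]. destruct p; [simpl; lra|].
  assert (x <= x ^ S p) by (apply IHp; lia). simpl in *. nra.
Qed.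

Lemma div_pow_le_inv_sqrt (a D : R) p t : (1 <= p)%nat -> (1 <= t)%nat ->
  0 <= a <= D * sqrt (INR t) -> a / INR t ^ p <= D / sqrt (INR t).
Proof.
  intros Hp Ht [Ha0 Ha].
  assert (Ht1 : 1 <= INR t) by (apply (le_INR 1); lia).
  assert (Hs := sqrt_INR_pos t Ht).
  assert (Htp : INR t <= INR t ^ p) by (apply pow_ge_self; auto).
  unfold Rdiv. apply Rle_trans with (D * sqrt (INR t) * / INR t).
  - apply Rmult_le_compat; auto; [apply Rlt_le, Rinv_0_lt_compat; lra|].
    apply Rinv_le_contravar; lra.
  - rewrite Rmult_assoc. apply Rmult_le_compat_l; [nra|].
    right. rewrite <- (sqrt_sqrt (INR t)) at 2 by lra. field. lra.
Qed.

Lemma Ainner_le k : all_pos k -> forall m, (1 <= m)%nat -> Ainner k m <= 2 ^ length k * sqrt (INR m).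
Proof.
  induction k as [|p k IH] using rev_ind; intros Hk m Hm.
  - unfold Ainner. simpl. assert (H := sqrt_INR_ge1 m Hm). lra.
  - apply Forall_app in Hk. destruct Hk as [Hk Hp]. inversion Hp; subst.
    rewrite Ainner_snoc. unfold Ainner_step. rewrite length_app, Nat.add_1_r. simpl pow.
    eapply Rle_trans.
    { apply rsum_le with (G := fun t => 2 ^ length k * (if Nat.eqb t 0 then 0 else / sqrt (INR t))).
      intros t Ht. destruct (Nat.eqb t 0) eqn:E; [lra|]. apply Nat.eqb_neq in E.
      apply div_pow_le_inv_sqrt; auto; [lia|].
      split; [apply Ainner_nonneg|apply IH; auto; lia]. }
    rewrite rsum_scal. assert (H := rsum_inv_sqrt_le m).
    assert (0 < 2 ^ length k) by (apply pow_lt; lra). nra.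
Qed.

Lemma Ainner_increment_bound k : all_pos k ->
  forall m, (1 <= m)%nat -> 0 <= Ainner k (S m) - Ainner k m <= 2 ^ length k / sqrt (INR m).
Proof.
  intros Hk m Hm. assert (Hs := sqrt_INR_pos m Hm).
  destruct k as [|p k] using rev_ind.
  - unfold Ainner. simpl. split; [lra|].
    assert (0 < 1 / sqrt (INR m)) by (apply Rdiv_lt_0_compat; lra). lra.
  - clear IHk. apply Forall_app in Hk. destruct Hk as [Hk Hp]. inversion Hp; subst.
    rewrite Ainner_snoc, Ainner_step_increment by auto.
    assert (HA0 := Ainner_nonneg k m).
    split; [apply Rdiv_le_0_compat; auto; apply pow_lt, lt_0_INR; lia|].
    rewrite length_app, Nat.add_1_r. simpl pow.
    eapply Rle_trans; [apply div_pow_le_inv_sqrt; eauto; split; auto; apply Ainner_le; auto|].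
    unfold Rdiv. assert (0 < / sqrt (INR m)) by (apply Rinv_0_lt_compat; auto).
    assert (0 < 2 ^ length k) by (apply pow_lt; lra). nra.
Qed.

Lemma pow_sub_le x y p : 0 <= y -> y <= x -> x <= 1 -> x ^ p - y ^ p <= INR p * (x - y).
Proof.
  intros Hy Hyx Hx. induction p; [simpl; lra|].
  rewrite S_INR. simpl.
  assert (0 <= y ^ p) by (apply pow_le; auto).
  assert (y ^ p <= 1) by (apply pow_le_1; lra).
  assert (y ^ p <= x ^ p) by (apply pow_incr; lra).
  nra.
Qed.

Lemma inv_pow_sub_le x p : 1 <= x -> / x ^ p - / (x + 1) ^ p <= INR p * / (x * (x + 1)).
Proof.
  intros Hx. rewrite <- !pow_inv.
  replace (/ (x * (x + 1))) with (/ x - / (x + 1)) by (field; lra).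
  apply pow_sub_le.
  - apply Rlt_le, Rinv_0_lt_compat; lra.
  - apply Rinv_le_contravar; lra.
  - rewrite <- Rinv_1. apply Rinv_le_contravar; lra.
Qed.

(* [1/sqrt m - 1/sqrt (m+1) = 1 / (sqrt m sqrt (m+1) (sqrt m + sqrt (m+1)))] *)
Lemma inv_mul_sqrt_le m : (1 <= m)%nat ->
  / (INR m * sqrt (INR m)) <= 4 * (/ sqrt (INR m) - / sqrt (INR (S m))).
Proof.
  intros Hm.
  set (s := sqrt (INR m)). set (s' := sqrt (INR (S m))).
  assert (Hs1 : 1 <= s) by (apply sqrt_INR_ge1; auto).
  assert (Es : s * s = INR m) by (unfold s; apply sqrt_sqrt, pos_INR).
  assert (Es' : s' * s' = INR m + 1) by (unfold s'; rewrite sqrt_sqrt by apply pos_INR; apply S_INR).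
  assert (Hs' : 0 < s') by (apply sqrt_INR_pos; lia).
  assert (Hss : s <= s') by nra.
  assert (Hs'2 : s' <= 2 * s) by nra.
  rewrite <- Es.
  replace (4 * (/ s - / s')) with (4 / ((s' + s) * (s * s'))) by (field_simplify_eq; nra || lra).
  apply Rmult_le_reg_r with ((s' + s) * (s * s') * (s * s * s)).
  { apply Rmult_lt_0_compat; [apply Rmult_lt_0_compat|]; nra. }
  unfold Rdiv.
  replace (/ (s * s * s) * ((s' + s) * (s * s') * (s * s * s))) with ((s' + s) * (s * s')) by (field; lra).
  replace (4 * / ((s' + s) * (s * s')) * ((s' + s) * (s * s') * (s * s * s))) with (4 * (s * s * s))
    by (field; nra).
  nra.
Qed.

Section DivPow.

Variables (A : nat -> R) (p : nat) (D : R).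
Hypotheses (Hp : (1 <= p)%nat)
  (HA : forall m, (1 <= m)%nat -> 0 <= A m <= D * sqrt (INR m))
  (HdA : forall m, (1 <= m)%nat -> 0 <= A (S m) - A m <= D / sqrt (INR m)).

Lemma div_pow_variation m : (1 <= m)%nat ->
  Rabs (A m / INR m ^ p - A (S m) / INR (S m) ^ p) <= (INR p + 1) * D * / (INR m * sqrt (INR m)).
Proof.
  intros Hm. rewrite S_INR.
  set (x := INR m). set (s := sqrt x).
  assert (Hx1 : 1 <= x) by (apply (le_INR 1); auto).
  assert (Hs1 : 1 <= s) by (apply sqrt_INR_ge1; auto).
  assert (Es : s * s = x) by (unfold s; apply sqrt_sqrt; lra).
  destruct (HA m Hm) as [HA0 HA1]. destruct (HdA m Hm) as [Hd0 Hd1]. fold x s in HA1, Hd1.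
  assert (HD : 0 <= D) by (assert (0 <= D * s) by lra; nra).
  set (a := A m) in *. set (a1 := A (S m)) in *.
  set (u := / x ^ p). set (v := / (x + 1) ^ p).
  assert (Hv0 : 0 <= v) by (apply Rlt_le, Rinv_0_lt_compat, pow_lt; lra).
  assert (Hv1 : v <= / (x + 1)).
  { apply Rinv_le_contravar; [lra|]. apply pow_ge_self; auto. lra. }
  assert (Huv : u - v <= INR p * / (x * (x + 1))) by (apply inv_pow_sub_le; auto).
  assert (Hvu : v <= u) by (apply Rinv_le_contravar; [apply pow_lt; lra|apply pow_incr; lra]).
  assert (Hxs : 0 < x * s) by nra.
  assert (Hp0 := pos_INR p).
  unfold Rdiv. fold u v.
  replace (a * u - a1 * v) with (a * (u - v) - (a1 - a) * v) by ring.
  eapply Rle_trans; [apply Rabs_triang|]. rewrite Rabs_Ropp.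
  rewrite (Rabs_pos_eq (a * (u - v))) by (apply Rmult_le_pos; lra).
  rewrite (Rabs_pos_eq ((a1 - a) * v)) by (apply Rmult_le_pos; lra).
  assert (B1 : a * (u - v) <= D * INR p * / (x * s)).
  { apply Rle_trans with (D * s * (INR p * / (x * (x + 1)))); [apply Rmult_le_compat; lra|].
    replace (D * INR p * / (x * s)) with (D * INR p * s * / (x * x)) by (rewrite <- Es at 2; field; lra).
    replace (D * s * (INR p * / (x * (x + 1)))) with (D * INR p * s * / (x * (x + 1))) by ring.
    apply Rmult_le_compat_l; [nra|]. apply Rinv_le_contravar; nra. }
  assert (B2 : (a1 - a) * v <= D * / (x * s)).
  { apply Rle_trans with (D / s * / (x + 1)); [apply Rmult_le_compat; lra|].
    unfold Rdiv. rewrite Rmult_assoc. apply Rmult_le_compat_l; [lra|].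
    rewrite <- Rinv_mult. apply Rinv_le_contravar; nra. }
  lra.
Qed.

Lemma sqrt_controlled_div_pow : sqrt_controlled (fun m => A m / INR m ^ p) (4 * (INR p + 1) * D).
Proof.
  intros m Hm.
  assert (Hp1 : 1 <= INR p) by (apply (le_INR 1); auto).
  destruct (HA m Hm) as [HA0 HA1].
  assert (HD : 0 <= D) by (assert (H := sqrt_INR_ge1 m Hm); nra).
  assert (Hs := sqrt_INR_pos m Hm).
  split.
  - rewrite Rabs_pos_eq by (apply Rdiv_le_0_compat; auto; apply pow_lt, lt_0_INR; lia).
    eapply Rle_trans; [apply div_pow_le_inv_sqrt; auto|].
    unfold Rdiv. assert (0 < / sqrt (INR m)) by (apply Rinv_0_lt_compat; auto).
    assert (0 <= D * / sqrt (INR m)) by (apply Rmult_le_pos; lra).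
    replace (4 * (INR p + 1) * D * / sqrt (INR m)) with (4 * (INR p + 1) * (D * / sqrt (INR m)))
      by ring.
    nra.
  - eapply Rle_trans; [apply div_pow_variation; auto|].
    replace (4 * (INR p + 1) * D * (/ sqrt (INR m) - / sqrt (INR (S m)))) with
      ((INR p + 1) * D * (4 * (/ sqrt (INR m) - / sqrt (INR (S m))))) by ring.
    apply Rmult_le_compat_l; [nra|]. apply inv_mul_sqrt_le; auto.
Qed.

End DivPow.

Lemma li_coef_sqrt_controlled k : all_pos k -> exists C, sqrt_controlled (li_coef k) C.
Proof.
  intros Hk. destruct k as [|p k] using rev_ind.
  - exists 0. intros [|m] Hm; [lia|]. unfold li_coef, delta0. simpl.
    rewrite Rminus_0_r, Rabs_R0. unfold Rdiv. split; lra.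
  - clear IHk. apply Forall_app in Hk. destruct Hk as [Hk Hp]. inversion Hp; subst.
    exists (4 * (INR p + 1) * 2 ^ length k).
    apply sqrt_controlled_ext with (fun m => Ainner k m / INR m ^ p).
    + apply sqrt_controlled_div_pow; auto.
      * intros m Hm. split; [apply Ainner_nonneg|apply Ainner_le; auto].
      * apply Ainner_increment_bound; auto.
    + intros m _. rewrite li_coef_nonnil by (destruct k; discriminate).
      rewrite removelast_last, last_last. reflexivity.
Qed.

Lemma words_coef_sqrt_controlled W : exists C, sqrt_controlled (words_coef W) C.
Proof.
  induction W as [|w W [C IH]].
  - exists 0. intros m Hm. unfold words_coef. simpl. rewrite Rminus_0_r, Rabs_R0. unfold Rdiv. lra.
  - destruct (li_coef_sqrt_controlled _ (word_index_pos w)) as [D Hw]. exists (D + C).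
    apply (sqrt_controlled_plus (word_coef w) (words_coef W)); auto.
Qed.

Lemma is_derive_val {V : NormedModule R_AbsRing} (f : R -> V) x l l' :
  is_derive f x l -> l = l' -> is_derive f x l'.
Proof. intros H <-. exact H. Qed.

Lemma is_derive_Cval (f : R -> C) x (l l' : C) : is_derive f x l -> l = l' -> is_derive f x l'.
Proof. intros H <-. exact H. Qed.

Lemma is_derive_fst (f : R -> C) x (l : C) :
  is_derive f x l -> is_derive (fun t => fst (f t)) x (fst l).
Proof.
  intros H. eapply filterdiff_ext_lin.
  - apply (filterdiff_comp' f (fun p : prod_NormedModule R_AbsRing R_NormedModule R_NormedModule => fst p)
             x _ (fun p : prod_NormedModule R_AbsRing R_NormedModule R_NormedModule => fst p) H).
    apply filterdiff_linear, is_linear_fst.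
  - reflexivity.
Qed.

Lemma is_derive_snd (f : R -> C) x (l : C) :
  is_derive f x l -> is_derive (fun t => snd (f t)) x (snd l).
Proof.
  intros H. eapply filterdiff_ext_lin.
  - apply (filterdiff_comp' f (fun p : prod_NormedModule R_AbsRing R_NormedModule R_NormedModule => snd p)
             x _ (fun p : prod_NormedModule R_AbsRing R_NormedModule R_NormedModule => snd p) H).
    apply filterdiff_linear, is_linear_snd.
  - reflexivity.
Qed.

Lemma is_derive_pair (f g : R -> R) x a b :
  is_derive f x a -> is_derive g x b -> is_derive (fun t => (f t, g t) : C) x ((a, b) : C).
Proof.
  intros H1 H2.
  assert (H := filterdiff_comp'_2 f g (fun u v => (u, v) : C) x (fun y => scal y a) (fun y => scal y b)
                 (fun u v => (u, v) : C) H1 H2).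
  eapply filterdiff_ext_lin; [apply H|reflexivity].
  apply filterdiff_linear. split; try reflexivity.
  exists 1. split; [lra|]. intros [u1 u2]. right.
  unfold norm. simpl. unfold prod_norm. simpl. ring.
Qed.

Lemma is_derive_C (f : R -> C) x (l : C) :
  is_derive (fun t => fst (f t)) x (fst l) -> is_derive (fun t => snd (f t)) x (snd l) ->
  is_derive f x l.
Proof.
  intros H1 H2. destruct l as [a b].
  apply is_derive_ext with (fun t => (fst (f t), snd (f t)) : C); [intros t; destruct (f t); auto|].
  apply is_derive_pair; auto.
Qed.

Lemma is_derive_Cconst (c : C) x : is_derive (fun _ : R => c) x (RtoC 0).
Proof. apply (is_derive_const (V := prod_NormedModule R_AbsRing R_NormedModule R_NormedModule)). Qed.

Lemma is_derive_Rmult (f g : R -> R) x a b :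
  is_derive f x a -> is_derive g x b -> is_derive (fun t => f t * g t) x (a * g x + f x * b).
Proof. intros Hf Hg. apply (is_derive_mult f g x a b Hf Hg Rmult_comm). Qed.

Lemma is_derive_Cmult (f g : R -> C) x (a b : C) :
  is_derive f x a -> is_derive g x b ->
  is_derive (fun t => Cmult (f t) (g t)) x (Cplus (Cmult a (g x)) (Cmult (f x) b)).
Proof.
  intros Hf Hg.
  assert (F1 := is_derive_fst _ _ _ Hf). assert (F2 := is_derive_snd _ _ _ Hf).
  assert (G1 := is_derive_fst _ _ _ Hg). assert (G2 := is_derive_snd _ _ _ Hg).
  apply is_derive_C.
  - eapply is_derive_ext with (f := fun t => fst (f t) * fst (g t) - snd (f t) * snd (g t)).
    { intros t. destruct (f t), (g t). reflexivity. }
    eapply is_derive_val.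
    { apply (is_derive_minus (fun t => fst (f t) * fst (g t)) (fun t => snd (f t) * snd (g t)));
        apply is_derive_Rmult; eauto. }
    destruct a, b, (f x), (g x). simpl. unfold minus, plus, opp. simpl. ring.
  - eapply is_derive_ext with (f := fun t => fst (f t) * snd (g t) + snd (f t) * fst (g t)).
    { intros t. destruct (f t), (g t). reflexivity. }
    eapply is_derive_val.
    { apply (is_derive_plus (fun t => fst (f t) * snd (g t)) (fun t => snd (f t) * fst (g t)));
        apply is_derive_Rmult; eauto. }
    destruct a, b, (f x), (g x). simpl. unfold plus. simpl. ring.
Qed.

Lemma is_derive_Cscal (c : C) (f : R -> C) (x : R) (a : C) :
  is_derive f x a -> is_derive (fun t => Cmult c (f t)) x (Cmult c a).
Proof.
  intros H. eapply is_derive_Cval; [apply is_derive_Cmult; [apply is_derive_Cconst|exact H]|].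
  cbv beta. ring.
Qed.

Lemma is_derive_Csum {A : Type} (F : A -> R -> C) (F' : A -> C) (l : list A) x :
  (forall a, In a l -> is_derive (F a) x (F' a)) ->
  is_derive (fun t => Csum (map (fun a => F a t) l)) x (Csum (map F' l)).
Proof.
  induction l as [|a l IH]; intros H; simpl.
  - apply is_derive_Cconst.
  - apply (is_derive_plus (V := prod_NormedModule R_AbsRing R_NormedModule R_NormedModule)).
    + apply H. simpl. auto.
    + apply IH. intros. apply H. simpl. auto.
Qed.

Lemma is_derive_Ci_pow k x :
  is_derive (fun t => Cpow (Cmult Ci (RtoC t)) k) x
    (Cmult (RtoC (INR k)) (Cmult Ci (Cpow (Cmult Ci (RtoC x)) (k - 1)))).
Proof.
  assert (Hlin : is_derive (fun t => Cmult Ci (RtoC t)) x Ci).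
  { eapply is_derive_Cval; [apply is_derive_Cscal, is_derive_pair; [apply is_derive_id|apply is_derive_const]|].
    change (one, zero) with (RtoC 1). ring. }
  induction k.
  - simpl Cpow. eapply is_derive_Cval; [apply is_derive_Cconst|]. simpl. ring.
  - simpl Cpow. eapply is_derive_Cval; [apply is_derive_Cmult; [exact Hlin|exact IHk]|].
    rewrite S_INR. destruct k.
    + simpl. rewrite Rplus_0_l. ring.
    + replace (S (S k) - 1)%nat with (S k) by lia. replace (S k - 1)%nat with k by lia.
      simpl Cpow. rewrite RtoC_plus. ring.
Qed.

(** * The values [L(W; e^{is})] as trigonometric series *)

Lemma Cpow_eis s n : Cpow (eis s) n = eis (INR n * s).
Proof.
  induction n.
  - simpl. unfold eis. rewrite Rmult_0_l, cos_0, sin_0. reflexivity.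
  - rewrite Cpow_S, IHn. unfold eis, Cmult. simpl fst. simpl snd.
    rewrite S_INR. replace ((INR n + 1) * s) with (s + INR n * s) by ring.
    rewrite cos_plus, sin_plus. f_equal; ring.
Qed.

Definition circle_series (c : nat -> R) (s : R) : C :=
  (Series (fun m => c m * cos (INR m * s)), Series (fun m => c m * sin (INR m * s))).

Definition radial_series (c : nat -> R) (s t : R) : C :=
  (Series (fun m => c m * t ^ m * cos (INR m * s)), Series (fun m => c m * t ^ m * sin (INR m * s))).

Lemma circle_series_ext c d s : (forall m, c m = d m) -> circle_series c s = circle_series d s.
Proof. intros H. unfold circle_series. f_equal; apply Series_ext; intros; rewrite H; reflexivity. Qed.

Section CircleSeries.

Variables (c : nat -> R) (C s : R).
Hypotheses (Hc : sqrt_controlled c C) (Hs : 0 < s < 2 * PI).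

Lemma is_series_circle_cos : is_series (fun m => c m * cos (INR m * s)) (fst (circle_series c s)).
Proof. apply (sqrt_controlled_series_tail c _ C _ Hc (cos_bounded_partial_sums s Hs)). Qed.

Lemma is_series_circle_sin : is_series (fun m => c m * sin (INR m * s)) (snd (circle_series c s)).
Proof. apply (sqrt_controlled_series_tail c _ C _ Hc (sin_bounded_partial_sums s Hs)). Qed.

Lemma is_series_radial_cos t : 0 <= t <= 1 ->
  is_series (fun m => c m * t ^ m * cos (INR m * s)) (fst (radial_series c s t)).
Proof. intros Ht. apply (radial_series_tail c _ C _ t Hc (cos_bounded_partial_sums s Hs) Ht). Qed.

Lemma is_series_radial_sin t : 0 <= t <= 1 ->
  is_series (fun m => c m * t ^ m * sin (INR m * s)) (snd (radial_series c s t)).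
Proof. intros Ht. apply (radial_series_tail c _ C _ t Hc (sin_bounded_partial_sums s Hs) Ht). Qed.

Lemma radial_series_lim (tn : nat -> R) : (forall n, 0 <= tn n <= 1) -> is_lim_seq tn 1 ->
  is_lim_seq (fun n => fst (radial_series c s (tn n))) (fst (circle_series c s)) /\
  is_lim_seq (fun n => snd (radial_series c s (tn n))) (snd (circle_series c s)).
Proof.
  intros Ht Hlim. split.
  - apply (radial_limit c _ C _ tn Hc (cos_bounded_partial_sums s Hs) Ht Hlim).
  - apply (radial_limit c _ C _ tn Hc (sin_bounded_partial_sums s Hs) Ht Hlim).
Qed.

End CircleSeries.

Lemma circle_series_plus c d C D s : sqrt_controlled c C -> sqrt_controlled d D -> 0 < s < 2 * PI ->
  circle_series (fun m => c m + d m) s = Cplus (circle_series c s) (circle_series d s).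
Proof.
  intros Hc Hd Hs. unfold circle_series, Cplus. simpl. f_equal.
  - rewrite <- Series_plus by (eexists; eapply is_series_circle_cos; eauto).
    apply Series_ext. intros. ring.
  - rewrite <- Series_plus by (eexists; eapply is_series_circle_sin; eauto).
    apply Series_ext. intros. ring.
Qed.

Lemma Li_circle w s : 0 < s < 2 * PI -> Li (word_index w) (eis s) = circle_series (word_coef w) s.
Proof.
  intros Hs. unfold circle_series, word_coef.
  assert (Hpos := word_index_pos w).
  destruct (word_index w) as [|k0 k1] eqn:E.
  - unfold li_coef, delta0. rewrite !Series_delta0 by (intros [|m] Hm; [lia|simpl; ring]).
    simpl. rewrite Rmult_0_l, cos_0, sin_0. unfold RtoC. f_equal; ring.
  - assert (Hz : li_coef (k0 :: k1) 0 = 0) by (apply li_coef_0; auto; discriminate).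
    rewrite (Series_incr_1_aux (fun m => li_coef (k0 :: k1) m * cos (INR m * s))) by (rewrite Hz; ring).
    rewrite (Series_incr_1_aux (fun m => li_coef (k0 :: k1) m * sin (INR m * s))) by (rewrite Hz; ring).
    unfold Li, Cseries. f_equal; apply Series_ext; intros m; rewrite Cpow_eis;
      unfold Cmult, RtoC, eis; cbn [fst snd]; rewrite Rmult_0_l;
      [rewrite Rminus_0_r|rewrite Rplus_0_r]; reflexivity.
Qed.

Lemma Lmap_circle W s : 0 < s < 2 * PI -> Lmap W (eis s) = circle_series (words_coef W) s.
Proof.
  intros Hs. induction W as [|w W IH].
  - unfold Lmap, circle_series, words_coef. simpl.
    rewrite !Series_delta0 by (intros; ring). simpl. unfold RtoC. f_equal; ring.
  - change (Lmap (w :: W) (eis s)) with (Cplus (Li (word_index w) (eis s)) (Lmap W (eis s))).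
    rewrite IH, Li_circle by auto.
    destruct (li_coef_sqrt_controlled _ (word_index_pos w)) as [C1 H1].
    destruct (words_coef_sqrt_controlled W) as [C2 H2].
    rewrite <- (circle_series_plus _ _ C1 C2 s) by auto. reflexivity.
Qed.

(** * Shuffle products become products of values *)

Lemma ex_series_Rabs_radial c C (e : nat -> R) t :
  sqrt_controlled c C -> 0 <= t < 1 -> (forall m, Rabs (e m) <= 1) ->
  ex_series (fun m => Rabs (c m * t ^ m * e m)).
Proof.
  intros Hc Ht He. set (B := C + Rabs (c 0%nat)).
  apply (@ex_series_le R_AbsRing R_CompleteNormedModule _ (fun m => B * t ^ m)).
  - intros m. change (norm (Rabs (c m * t ^ m * e m))) with (Rabs (Rabs (c m * t ^ m * e m))).
    rewrite Rabs_Rabsolu, !Rabs_mult, (Rabs_pos_eq (t ^ m)) by (apply pow_le; lra).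
    assert (H1 := sqrt_controlled_bounded c C Hc m). assert (H2 := He m).
    assert (0 <= t ^ m) by (apply pow_le; lra).
    assert (0 <= Rabs (c m)) by apply Rabs_pos. assert (0 <= Rabs (e m)) by apply Rabs_pos.
    assert (Rabs (c m) * t ^ m <= B * t ^ m) by (apply Rmult_le_compat_r; auto).
    assert (Rabs (c m) * t ^ m * Rabs (e m) <= Rabs (c m) * t ^ m * 1)
      by (apply Rmult_le_compat_l; auto; apply Rmult_le_pos; auto).
    lra.
  - apply (ex_series_scal_l (K := R_AbsRing) (V := R_NormedModule) B (fun m => t ^ m)).
    apply ex_series_geom. rewrite Rabs_pos_eq; lra.
Qed.

Lemma conv_cos_terms c d t s n :
  sum_f_R0 (fun k => c k * t ^ k * cos (INR k * s) * (d (n - k)%nat * t ^ (n - k) * cos (INR (n - k) * s))) n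
  - sum_f_R0 (fun k => c k * t ^ k * sin (INR k * s) * (d (n - k)%nat * t ^ (n - k) * sin (INR (n - k) * s))) n
  = conv c d n * t ^ n * cos (INR n * s).
Proof.
  rewrite <- minus_sum. unfold conv. rewrite Rmult_assoc, Rmult_comm, scal_sum.
  apply sum_eq. intros k Hk.
  replace (t ^ n) with (t ^ k * t ^ (n - k)) by (rewrite <- pow_add; f_equal; lia).
  replace (INR n * s) with (INR k * s + INR (n - k) * s) by (rewrite minus_INR by lia; ring).
  rewrite cos_plus. ring.
Qed.

Lemma conv_sin_terms c d t s n :
  sum_f_R0 (fun k => c k * t ^ k * cos (INR k * s) * (d (n - k)%nat * t ^ (n - k) * sin (INR (n - k) * s))) n
  + sum_f_R0 (fun k => c k * t ^ k * sin (INR k * s) * (d (n - k)%nat * t ^ (n - k) * cos (INR (n - k) * s))) n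
  = conv c d n * t ^ n * sin (INR n * s).
Proof.
  rewrite <- sum_plus. unfold conv. rewrite Rmult_assoc, Rmult_comm, scal_sum.
  apply sum_eq. intros k Hk.
  replace (t ^ n) with (t ^ k * t ^ (n - k)) by (rewrite <- pow_add; f_equal; lia).
  replace (INR n * s) with (INR k * s + INR (n - k) * s) by (rewrite minus_INR by lia; ring).
  rewrite sin_plus. ring.
Qed.

(* Inside the disc the series converge absolutely, so Mertens' theorem applies. *)
Lemma radial_series_conv c d C D s t :
  sqrt_controlled c C -> sqrt_controlled d D -> 0 < s < 2 * PI -> 0 <= t < 1 ->
  radial_series (conv c d) s t = Cmult (radial_series c s t) (radial_series d s t).
Proof.
  intros Hc Hd Hs Ht. assert (Ht' : 0 <= t <= 1) by lra.
  assert (Bcos : forall m, Rabs (cos (INR m * s)) <= 1) by (intros; apply Rabs_le, COS_bound).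
  assert (Bsin : forall m, Rabs (sin (INR m * s)) <= 1) by (intros; apply Rabs_le, SIN_bound).
  assert (Rc := is_series_radial_cos c C s Hc Hs t Ht').
  assert (Ic := is_series_radial_sin c C s Hc Hs t Ht').
  assert (Rd := is_series_radial_cos d D s Hd Hs t Ht').
  assert (Id := is_series_radial_sin d D s Hd Hs t Ht').
  assert (ARc := ex_series_Rabs_radial c C _ t Hc Ht Bcos).
  assert (AIc := ex_series_Rabs_radial c C _ t Hc Ht Bsin).
  assert (ARd := ex_series_Rabs_radial d D _ t Hd Ht Bcos).
  assert (AId := ex_series_Rabs_radial d D _ t Hd Ht Bsin).
  unfold radial_series at 1, Cmult. f_equal; apply is_series_unique.
  - eapply is_series_ext; [|apply (is_series_minus _ _ _ _ (is_series_mult _ _ _ _ Rc Rd ARc ARd)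
                                     (is_series_mult _ _ _ _ Ic Id AIc AId))].
    intros n. simpl. unfold plus, opp. simpl. rewrite <- conv_cos_terms. reflexivity.
  - eapply is_series_ext; [|apply (is_series_plus _ _ _ _ (is_series_mult _ _ _ _ Rc Id ARc AId)
                                    (is_series_mult _ _ _ _ Ic Rd AIc ARd))].
    intros n. simpl. unfold plus. simpl. rewrite <- conv_sin_terms. reflexivity.
Qed.

Lemma is_lim_seq_real_unique u (l1 l2 : R) : is_lim_seq u l1 -> is_lim_seq u l2 -> l1 = l2.
Proof.
  intros H1 H2. apply is_lim_seq_unique in H1. apply is_lim_seq_unique in H2.
  rewrite H1 in H2. injection H2. auto.
Qed.

Definition radius_seq (n : nat) : R := 1 - / INR (S n).

Lemma radius_seq_range n : 0 <= radius_seq n < 1.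
Proof.
  unfold radius_seq. assert (1 <= INR (S n)) by (apply (le_INR 1); lia).
  assert (0 < / INR (S n)) by (apply Rinv_0_lt_compat; lra).
  assert (/ INR (S n) <= 1) by (rewrite <- Rinv_1; apply Rinv_le_contravar; lra). lra.
Qed.

Lemma radius_seq_lim : is_lim_seq radius_seq 1.
Proof.
  assert (H := is_lim_seq_inv INR p_infty is_lim_seq_INR ltac:(discriminate)).
  simpl in H. apply is_lim_seq_incr_1 in H.
  assert (H0 := is_lim_seq_minus' _ _ 1 0 (is_lim_seq_const 1) H).
  rewrite Rminus_0_r in H0. exact H0.
Qed.

(* Abel's theorem carries [radial_series_conv] to the boundary. *)
Lemma circle_series_conv c d C D E s :
  sqrt_controlled c C -> sqrt_controlled d D -> sqrt_controlled (conv c d) E -> 0 < s < 2 * PI ->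
  circle_series (conv c d) s = Cmult (circle_series c s) (circle_series d s).
Proof.
  intros Hc Hd He Hs.
  assert (Hr : forall n, 0 <= radius_seq n <= 1)
    by (intros n; assert (H := radius_seq_range n); lra).
  destruct (radial_series_lim c C s Hc Hs _ Hr radius_seq_lim) as [L1 L2].
  destruct (radial_series_lim d D s Hd Hs _ Hr radius_seq_lim) as [L3 L4].
  destruct (radial_series_lim _ E s He Hs _ Hr radius_seq_lim) as [L5 L6].
  assert (E' : forall n, radial_series (conv c d) s (radius_seq n) =
                         Cmult (radial_series c s (radius_seq n)) (radial_series d s (radius_seq n)))
    by (intros n; apply (radial_series_conv c d C D); auto; apply radius_seq_range).
  unfold Cmult. apply injective_projections; simpl.
  - apply (is_lim_seq_real_unique _ _ _ L5). eapply is_lim_seq_ext.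
    { intros n. rewrite E'. reflexivity. }
    apply is_lim_seq_minus'; apply is_lim_seq_mult'; auto.
  - apply (is_lim_seq_real_unique _ _ _ L6). eapply is_lim_seq_ext.
    { intros n. rewrite E'. reflexivity. }
    apply is_lim_seq_plus'; apply is_lim_seq_mult'; auto.
Qed.

Lemma Lmap_shuffle u v s : in_H1 u -> in_H1 v -> 0 < s < 2 * PI ->
  Lmap (shuffle u v) (eis s) = Cmult (Li (word_index u) (eis s)) (Li (word_index v) (eis s)).
Proof.
  intros Hu Hv Hs. rewrite Lmap_circle, !Li_circle by auto.
  destruct (li_coef_sqrt_controlled _ (word_index_pos u)) as [C Hc].
  destruct (li_coef_sqrt_controlled _ (word_index_pos v)) as [D Hd].
  destruct (words_coef_sqrt_controlled (shuffle u v)) as [E He].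
  assert (Hsh : forall m, words_coef (shuffle u v) m = conv (word_coef u) (word_coef v) m)
    by (intros; apply words_coef_shuffle; auto).
  rewrite (circle_series_ext _ _ s Hsh). apply (circle_series_conv _ _ C D E); auto.
  apply sqrt_controlled_ext with (words_coef (shuffle u v)); auto.
Qed.

Lemma Csum_app l1 l2 : Csum (l1 ++ l2) = Cplus (Csum l1) (Csum l2).
Proof. induction l1; simpl. ring. rewrite IHl1. ring. Qed.

Lemma Csum_ext {A : Type} (f g : A -> C) (l : list A) :
  (forall a, In a l -> f a = g a) -> Csum (map f l) = Csum (map g l).
Proof.
  induction l; intros H; simpl; auto.
  rewrite H by (simpl; auto). rewrite IHl by (intros; apply H; simpl; auto). reflexivity.
Qed.

Lemma Csum_scal_l {A : Type} (f : A -> C) (l : list A) c :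
  Csum (map (fun a => Cmult c (f a)) l) = Cmult c (Csum (map f l)).
Proof. induction l; simpl. ring. rewrite IHl. ring. Qed.

Lemma Csum_scal_r {A : Type} (f : A -> C) (l : list A) c :
  Csum (map (fun a => Cmult (f a) c) l) = Cmult (Csum (map f l)) c.
Proof. induction l; simpl. ring. rewrite IHl. ring. Qed.

Lemma Csum_zero {A : Type} (l : list A) : Csum (map (fun _ => RtoC 0) l) = RtoC 0.
Proof. induction l; simpl; auto. rewrite IHl. ring. Qed.

Lemma Csum_flat_map {A B : Type} (G : B -> C) (f : A -> list B) (l : list A) :
  Csum (map G (flat_map f l)) = Csum (map (fun a => Csum (map G (f a))) l).
Proof. induction l; simpl; auto. rewrite map_app, Csum_app, IHl. reflexivity. Qed.

Lemma Csum_filter {A : Type} (G : A -> C) (P : A -> bool) (l : list A) :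
  Csum (map G (filter P l)) = Csum (map (fun a => if P a then G a else RtoC 0) l).
Proof. induction l; simpl; auto. destruct (P a); simpl; rewrite IHl; auto. ring. Qed.

Lemma Csum_telescope (y : nat -> C) M :
  Csum (map (fun t => Cminus (y t) (y (S t))) (seq 0 M)) = Cminus (y 0%nat) (y M).
Proof.
  induction M; [simpl; ring|].
  rewrite seq_S, map_app, Csum_app, IHM. simpl. ring.
Qed.

Lemma Lmap_flat_map {A : Type} (f : A -> list (list bool)) U z :
  Lmap (flat_map f U) z = Csum (map (fun u => Lmap (f u) z) U).
Proof. unfold Lmap. apply Csum_flat_map. Qed.

Lemma Lmap_shuffleL U V s : (forall u, In u U -> in_H1 u) -> (forall v, In v V -> in_H1 v) ->
  0 < s < 2 * PI -> Lmap (shuffleL U V) (eis s) = Cmult (Lmap U (eis s)) (Lmap V (eis s)).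
Proof.
  intros HU HV Hs. unfold shuffleL. rewrite Lmap_flat_map.
  unfold Lmap at 2. rewrite <- Csum_scal_r. apply Csum_ext. intros u Hu.
  rewrite Lmap_flat_map. unfold Lmap at 2. rewrite <- Csum_scal_l. apply Csum_ext. intros v Hv.
  apply Lmap_shuffle; auto.
Qed.

Lemma In_e1sh r w : In w (e1sh r) -> in_H1 w /\ length w = r.
Proof.
  revert w. induction r; intros w Hw.
  - destruct Hw as [<-|[]]. simpl; auto.
  - change (e1sh (S r)) with (shuffleL [[true]] (e1sh r)) in Hw. unfold shuffleL in Hw.
    apply in_flat_map in Hw. destruct Hw as [u [[<-|[]] Hw]].
    apply in_flat_map in Hw. destruct Hw as [v [Hv Hw]].
    destruct (IHr v Hv) as [Hv1 Hv2].
    destruct (In_shuffle _ _ _ Hw) as [L HH]. simpl in L. split; [apply HH; simpl; auto|lia].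
Qed.

Lemma Lmap_e1sh r s : 0 < s < 2 * PI -> Lmap (e1sh r) (eis s) = Cpow (Li [1%nat] (eis s)) r.
Proof.
  intros Hs. induction r.
  - unfold Lmap. simpl. ring.
  - change (e1sh (S r)) with (shuffleL [[true]] (e1sh r)).
    rewrite Lmap_shuffleL, IHr, Cpow_S; auto.
    + f_equal. unfold Lmap. simpl. ring.
    + intros u [<-|[]]. reflexivity.
    + intros v Hv. apply (In_e1sh r v Hv).
Qed.

(** * Differentiating [L(W e0; e^{is})] *)

Lemma is_derive_circle_series c d Kc Kd s0 :
  sqrt_controlled c Kc -> sqrt_controlled d Kd -> (forall m, d m * INR m = c m) -> 0 < s0 < 2 * PI ->
  is_derive (circle_series d) s0 (Cmult Ci (circle_series c s0)).
Proof.
  intros Hc Hd Hdc Hs0. unfold circle_series at 2.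
  replace (Cmult Ci (Series (fun m => c m * cos (INR m * s0)), Series (fun m => c m * sin (INR m * s0))))
    with ((Series (fun m => c m * - sin (INR m * s0)), Series (fun m => c m * cos (INR m * s0))) : C).
  2:{ rewrite (Series_ext _ (fun m => - (c m * sin (INR m * s0)))) by (intros; ring).
      rewrite Series_opp. unfold Ci, Cmult. simpl. f_equal; ring. }
  apply is_derive_pair; apply is_derive_Reals.
  - apply (derivable_pt_lim_series_termwise c d (fun m x => - sin (INR m * x)) (fun m x => cos (INR m * x)) Kc);
      auto.
    + intros x Hx p k Hpk. eapply Rle_trans; [|apply (sin_bounded_partial_sums x Hx p k Hpk)].
      right. rewrite !rsum_opp, <- Rabs_Ropp. f_equal. ring.
    + intros m x. apply is_derive_Reals. auto_derive; auto. ring.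
    + intros x Hx. eexists. apply (is_series_circle_cos d Kd x Hd Hx).
  - apply (derivable_pt_lim_series_termwise c d (fun m x => cos (INR m * x)) (fun m x => sin (INR m * x)) Kc);
      auto.
    + intros x Hx. apply cos_bounded_partial_sums; auto.
    + intros m x. apply is_derive_Reals. auto_derive; auto. ring.
    + intros x Hx. eexists. apply (is_series_circle_sin d Kd x Hd Hx).
Qed.

Definition proper_words (W : list (list bool)) : Prop := forall w, In w W -> in_H1 w /\ w <> [].

Lemma is_derive_Lmap_e0 W s0 : proper_words W -> 0 < s0 < 2 * PI ->
  is_derive (fun s => Lmap (rmulL W [false]) (eis s)) s0 (Cmult Ci (Lmap W (eis s0))).
Proof.
  intros HW Hs.
  destruct (words_coef_sqrt_controlled W) as [C Hc].
  destruct (words_coef_sqrt_controlled (rmulL W [false])) as [D Hd].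
  apply (is_derive_ext_loc (circle_series (words_coef (rmulL W [false])))).
  { eapply filter_imp; [|apply (locally_circle s0 Hs)]. intros s Hs'. symmetry. apply Lmap_circle; auto. }
  rewrite Lmap_circle by auto. apply (is_derive_circle_series _ _ C D); auto.
  intros [|m].
  - simpl. rewrite Rmult_0_r. symmetry. apply words_coef_0, HW.
  - unfold rmulL. rewrite words_coef_snoc; [reflexivity|].
    intros w Hw. destruct (HW w Hw). split; auto. apply in_H1_snoc; auto.
Qed.

Lemma lsum_app l1 l2 : lsum (l1 ++ l2) = (lsum l1 + lsum l2)%nat.
Proof. induction l1; simpl; auto. unfold lsum in *. simpl. rewrite IHl1. lia. Qed.

Lemma lsum_snoc l x : lsum (l ++ [x]) = (lsum l + x)%nat.
Proof. rewrite lsum_app. simpl. lia. Qed.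

Lemma In_le_lsum a l : In a l -> (a <= lsum l)%nat.
Proof.
  induction l; simpl; [tauto|]. intros [->|H]; unfold lsum in *; simpl; [lia|].
  specialize (IHl H). lia.
Qed.

Lemma firstn_snoc_le {A : Type} (l : list A) x s : (s <= length l)%nat -> firstn s (l ++ [x]) = firstn s l.
Proof.
  intros H. rewrite firstn_app. replace (s - length l)%nat with 0%nat by lia. apply app_nil_r.
Qed.

Lemma skipn_snoc_le {A : Type} (l : list A) x k : (k <= length l)%nat ->
  skipn k (l ++ [x]) = skipn k l ++ [x].
Proof. intros H. rewrite skipn_app. replace (k - length l)%nat with 0%nat by lia. reflexivity. Qed.

Lemma In_lists_upto m b j : In j (lists_upto m b) -> length j = m /\ List.Forall (fun a => (a <= b)%nat) j.
Proof.
  revert j. induction m; intros j H.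
  - destruct H as [<-|[]]. simpl; auto.
  - change (lists_upto (S m) b) with (flat_map (fun x => map (cons x) (lists_upto m b)) (seq 0 (S b))) in H.
    apply in_flat_map in H. destruct H as [x [Hx H]].
    apply in_map_iff in H. destruct H as [j' [<- Hj']].
    apply in_seq in Hx. destruct (IHm j' Hj') as [L F]. simpl. split; auto. constructor; auto; lia.
Qed.

Lemma Csum_lists_upto_snoc n B (G : list nat -> C) :
  Csum (map G (lists_upto (S n) B)) =
  Csum (map (fun j => Csum (map (fun t => G (j ++ [t])) (seq 0 (S B)))) (lists_upto n B)).
Proof.
  revert G. induction n; intros G.
  - change (lists_upto 1 B) with (flat_map (fun x => map (cons x) [[]]) (seq 0 (S B))).
    rewrite Csum_flat_map. change (lists_upto 0 B) with [@nil nat].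
    transitivity (Cplus (Csum (map (fun t => G ([] ++ [t])) (seq 0 (S B)))) (RtoC 0)); [|reflexivity].
    rewrite Cplus_0_r. apply Csum_ext. intros a _. simpl. ring.
  - change (lists_upto (S (S n)) B) with (flat_map (fun x => map (cons x) (lists_upto (S n) B)) (seq 0 (S B))).
    change (lists_upto (S n) B) with (flat_map (fun x => map (cons x) (lists_upto n B)) (seq 0 (S B))) at 2.
    rewrite !Csum_flat_map. apply Csum_ext. intros x _.
    rewrite !map_map, (IHn (fun j => G (x :: j))). reflexivity.
Qed.

Lemma Csum_lists_upto_bound n B B' (G : list nat -> C) : (B <= B')%nat ->
  (forall j, length j = n -> (exists a, In a j /\ (B < a)%nat) -> G j = RtoC 0) ->
  Csum (map G (lists_upto n B')) = Csum (map G (lists_upto n B)).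
Proof.
  revert G. induction n; intros G HB HG; [reflexivity|].
  change (lists_upto (S n) B') with (flat_map (fun x => map (cons x) (lists_upto n B')) (seq 0 (S B'))).
  change (lists_upto (S n) B) with (flat_map (fun x => map (cons x) (lists_upto n B)) (seq 0 (S B))).
  rewrite !Csum_flat_map.
  replace (S B') with (S B + (B' - B))%nat by lia. rewrite seq_app, map_app, Csum_app.
  rewrite (Csum_ext _ (fun _ => RtoC 0) (seq (0 + S B) (B' - B))).
  - rewrite Csum_zero, Cplus_0_r. apply Csum_ext. intros x _. rewrite !map_map.
    apply (IHn (fun j => G (x :: j))); auto.
    intros j Hj [a [Ha Hb]]. apply HG; [simpl; auto|]. exists a. simpl; auto.
  - intros x Hx. apply in_seq in Hx. rewrite map_map.
    rewrite (Csum_ext _ (fun _ => RtoC 0)); [apply Csum_zero|].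
    intros j Hj. apply HG; [simpl; f_equal; apply (In_lists_upto n B' j Hj)|].
    exists x. simpl. split; auto. lia.
Qed.

Lemma forallb_ext_in {A : Type} (f g : A -> bool) (l : list A) :
  (forall a, In a l -> f a = g a) -> forallb f l = forallb g l.
Proof.
  induction l; intros H; simpl; auto.
  rewrite H by (simpl; auto). rewrite IHl by (intros; apply H; simpl; auto). reflexivity.
Qed.

Lemma precb_snoc j q t x : length j = length q ->
  precb (j ++ [t]) (q ++ [x]) = (precb j q && Nat.leb (lsum j + t) (lsum q + x))%bool.
Proof.
  intros L. unfold precb. rewrite length_app. simpl length.
  replace (S (length q + 1)) with (S (length q) + 1)%nat by lia.
  rewrite seq_app, forallb_app. simpl (seq (0 + S (length q)) 1). cbn [forallb].
  f_equal.
  - apply forallb_ext_in. intros s Hs. apply in_seq in Hs.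
    rewrite !firstn_snoc_le by lia. reflexivity.
  - rewrite (firstn_all2 (j ++ [t])), (firstn_all2 (q ++ [x])) by (rewrite length_app; simpl; lia).
    rewrite !lsum_snoc, Bool.andb_true_r. reflexivity.
Qed.

Lemma precb_lsum j q : length j = length q -> precb j q = true -> (lsum j <= lsum q)%nat.
Proof.
  intros L H. unfold precb in H. rewrite forallb_forall in H.
  specialize (H (length q) ltac:(apply in_seq; lia)).
  apply Nat.leb_le in H. rewrite !firstn_all2 in H by lia. exact H.
Qed.

Lemma In_prec_set j q : In j (prec_set q) -> length j = length q /\ precb j q = true.
Proof.
  unfold prec_set. intros H. apply filter_In in H. destruct H as [H1 H2].
  split; auto. apply (In_lists_upto _ _ _ H1).
Qed.

Lemma Csum_prec_set_snoc qb x (G : list nat -> C) :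
  Csum (map G (prec_set (qb ++ [x]))) =
  Csum (map (fun j => Csum (map (fun t => G (j ++ [t])) (seq 0 (S (lsum qb + x - lsum j)))))
            (prec_set qb)).
Proof.
  unfold prec_set. rewrite !Csum_filter, length_app, Nat.add_1_r, lsum_snoc, Csum_lists_upto_snoc.
  set (Bd := (lsum qb + x)%nat).
  rewrite (Csum_ext _ (fun j => if precb j qb
                                then Csum (map (fun t => G (j ++ [t])) (seq 0 (S (Bd - lsum j))))
                                else RtoC 0)).
  - apply Csum_lists_upto_bound; [unfold Bd; lia|].
    intros j Lj [a [Ha Hb]]. destruct (precb j qb) eqn:E; auto.
    assert (H1 := precb_lsum j qb Lj E). assert (H2 := In_le_lsum a j Ha). lia.
  - intros j Hj. destruct (In_lists_upto _ _ _ Hj) as [Lj _].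
    rewrite (Csum_ext _ (fun t => if precb j qb
                                  then (if Nat.leb (lsum j + t) Bd then G (j ++ [t]) else RtoC 0)
                                  else RtoC 0)).
    2:{ intros t _. rewrite precb_snoc by auto. destruct (precb j qb); reflexivity. }
    destruct (precb j qb) eqn:E; [|apply Csum_zero].
    assert (HL := precb_lsum j qb Lj E).
    replace (S Bd) with (S (Bd - lsum j) + lsum j)%nat by (unfold Bd in *; lia).
    rewrite seq_app, map_app, Csum_app.
    rewrite (Csum_ext _ (fun _ => RtoC 0) (seq (0 + S (Bd - lsum j)) (lsum j))).
    + rewrite Csum_zero, Cplus_0_r. apply Csum_ext. intros t Ht. apply in_seq in Ht.
      replace (Nat.leb (lsum j + t) Bd) with true; auto. symmetry. apply Nat.leb_le. lia.
    + intros t Ht. apply in_seq in Ht. replace (Nat.leb (lsum j + t) Bd) with false; auto.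
      symmetry. apply Nat.leb_gt. lia.
Qed.

Lemma rprod_ext n F G : (forall k, (k < n)%nat -> F k = G k) -> rprod n F = rprod n G.
Proof.
  induction n; intros H; simpl; auto.
  rewrite IHn by (intros; apply H; lia). rewrite H by lia. reflexivity.
Qed.

Lemma Ccoef_snoc qb x j t : length j = length qb ->
  Ccoef (qb ++ [x]) (j ++ [t]) =
  Ccoef qb j * ((-1) ^ t * INR (fact (lsum qb + x - lsum j)) / INR (fact (lsum qb + x - lsum j - t))).
Proof.
  intros L. unfold Ccoef. rewrite length_app, Nat.add_1_r.
  change (rprod (S (length qb)) ?F) with (rprod (length qb) F * F (length qb)). f_equal.
  - apply rprod_ext. intros s Hs. cbv beta. rewrite app_nth1, !firstn_snoc_le by lia. reflexivity.
  - cbv beta. rewrite app_nth2 by lia. replace (length qb - length j)%nat with 0%nat by lia. simpl nth.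
    rewrite (firstn_snoc_le j t (length qb)), (firstn_all2 (n := length qb) j) by lia.
    rewrite (firstn_all2 (n := S (length qb)) (qb ++ [x])) by (rewrite length_app; simpl; lia).
    rewrite (firstn_all2 (n := S (length qb)) (j ++ [t])) by (rewrite length_app; simpl; lia).
    rewrite !lsum_snoc, Nat.sub_add_distr. reflexivity.
Qed.

Lemma Bcoef_snoc q x : Bcoef (q ++ [x]) = Bcoef q * / INR (lsum q + x + S (length q)).
Proof.
  unfold Bcoef. rewrite length_app, Nat.add_1_r.
  change (rprod (S (length q)) ?F) with (rprod (length q) F * F (length q)). f_equal.
  - apply rprod_ext. intros s Hs. cbv beta. rewrite firstn_snoc_le by lia. reflexivity.
  - cbv beta. rewrite firstn_all2 by (rewrite length_app; simpl; lia). rewrite lsum_snoc. reflexivity.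
Qed.

Lemma combine_snoc {A B : Type} (l1 : list A) (l2 : list B) a b : length l1 = length l2 ->
  combine (l1 ++ [a]) (l2 ++ [b]) = combine l1 l2 ++ [(a, b)].
Proof.
  revert l2. induction l1; intros l2 L; destruct l2; simpl in *; try lia; auto.
  rewrite IHl1 by lia. reflexivity.
Qed.

Definition wjr_step (W : list (list bool)) (jr : nat * nat) : list (list bool) :=
  rmulL (shuffleL W (e1sh (snd jr))) (repeat false (S (fst jr))).

Lemma wjr_snoc j r t y : length j = length r ->
  wjr (j ++ [t]) (r ++ [y]) = rmulL (shuffleL (wjr j r) (e1sh y)) (repeat false (S t)).
Proof. intros L. unfold wjr. rewrite combine_snoc, fold_left_app by auto. reflexivity. Qed.

Lemma rmulL_nil W : rmulL W [] = W.
Proof. unfold rmulL. rewrite (map_ext _ (fun w => w)) by (intros; apply app_nil_r). apply map_id. Qed.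

Lemma rmulL_app W l1 l2 : rmulL (rmulL W l1) l2 = rmulL W (l1 ++ l2).
Proof. unfold rmulL. rewrite map_map. apply map_ext. intros. symmetry. apply app_assoc. Qed.

Lemma proper_rmulL W l : proper_words W -> proper_words (rmulL W l).
Proof.
  intros H w Hw. unfold rmulL in Hw. apply in_map_iff in Hw. destruct Hw as [w' [<- Hw']].
  destruct (H w' Hw') as [H1 H2]. destruct w'; [contradiction|]. split; [exact H1|discriminate].
Qed.

Lemma proper_shuffleL_e1sh U y : (forall u, In u U -> in_H1 u /\ (u <> [] \/ (1 <= y)%nat)) ->
  proper_words (shuffleL U (e1sh y)).
Proof.
  intros H w Hw. unfold shuffleL in Hw. apply in_flat_map in Hw. destruct Hw as [u [Hu Hw]].
  apply in_flat_map in Hw. destruct Hw as [v [Hv Hw]].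
  destruct (H u Hu) as [Hu1 Hu2]. destruct (In_e1sh y v Hv) as [Hv1 Hv2].
  apply (In_shuffle_nonnil u v); auto.
  destruct Hu2 as [Hu2|Hu2]; [left; auto|right; intros ->; simpl in Hv2; lia].
Qed.

Lemma proper_wjr j r : length j = length r -> r <> [] -> (1 <= hd 0%nat r)%nat -> proper_words (wjr j r).
Proof.
  intros L Hr Hh. destruct r as [|y0 r]; [contradiction|]. destruct j as [|t0 j]; [simpl in L; lia|].
  change (wjr (t0 :: j) (y0 :: r)) with (fold_left wjr_step (combine j r) (wjr_step [[]] (t0, y0))).
  assert (Hfold : forall l W, proper_words W -> proper_words (fold_left wjr_step l W)).
  { induction l as [|[t y] l IH]; intros W HW; simpl; auto.
    apply IH, proper_rmulL, proper_shuffleL_e1sh. intros u Hu. destruct (HW u Hu). auto. }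
  apply Hfold, proper_rmulL, proper_shuffleL_e1sh. intros u [<-|[]]. simpl in Hh. simpl. auto.
Qed.

Definition falling_coef (M t : nat) : R := (-1) ^ t * INR (fact M) / INR (fact (M - t)).

(* Integrating [i (is)^M L(W; e^{is})] by parts [M] times, using
   [d/ds L(W e0^(t+1); e^{is}) = i L(W e0^t; e^{is})]. *)
Definition antideriv_sum (M : nat) (W : list (list bool)) (s : R) : C :=
  Csum (map (fun t => Cmult (RtoC (falling_coef M t))
                (Cmult (Cpow (Cmult Ci (RtoC s)) (M - t)) (Lmap (rmulL W (repeat false (S t))) (eis s))))
            (seq 0 (S M))).

Lemma falling_coef_S M t : (t < M)%nat -> falling_coef M t * INR (M - t) = - falling_coef M (S t).
Proof.
  intros H. unfold falling_coef.
  replace (M - t)%nat with (S (M - S t)) by lia.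
  rewrite fact_simpl, mult_INR.
  assert (0 < INR (fact (M - S t))) by (apply lt_0_INR, lt_O_fact).
  assert (0 < INR (S (M - S t))) by (apply lt_0_INR; lia).
  simpl pow. field. lra.
Qed.

Lemma repeat_S_snoc (t : nat) : repeat false (S t) = repeat false t ++ [false].
Proof. induction t; simpl; auto. f_equal. exact IHt. Qed.

Lemma is_derive_antideriv_sum M W s0 : proper_words W -> 0 < s0 < 2 * PI ->
  is_derive (antideriv_sum M W) s0 (Cmult Ci (Cmult (Cpow (Cmult Ci (RtoC s0)) M) (Lmap W (eis s0)))).
Proof.
  intros HW Hs. unfold antideriv_sum.
  set (P := fun k => Cpow (Cmult Ci (RtoC s0)) k).
  set (X := fun k => Lmap (rmulL W (repeat false k)) (eis s0)).
  eapply is_derive_Cval.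
  { apply is_derive_Csum. intros t _.
    apply is_derive_Cscal, is_derive_Cmult; [apply is_derive_Ci_pow|].
    eapply is_derive_ext; [intros s; rewrite repeat_S_snoc, <- rmulL_app; reflexivity|].
    apply is_derive_Lmap_e0; [apply proper_rmulL, HW|exact Hs]. }
  set (y := fun t => Cmult (RtoC (falling_coef M t)) (Cmult Ci (Cmult (P (M - t)%nat) (X t)))).
  rewrite seq_S, map_app, Csum_app. simpl map. simpl Csum.
  rewrite (Csum_ext _ (fun t => Cminus (y t) (y (S t)))).
  - rewrite Csum_telescope, Nat.sub_diag.
    assert (H0 : falling_coef M 0 = 1).
    { unfold falling_coef. rewrite Nat.sub_0_r. simpl pow. field. apply not_0_INR, fact_neq_0. }
    assert (HX : X 0%nat = Lmap W (eis s0)) by (unfold X; simpl repeat; rewrite rmulL_nil; reflexivity).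
    unfold y. rewrite Nat.sub_0_r, Nat.sub_diag, H0, HX. unfold P. simpl INR. simpl Cpow.
    fold (X M). ring.
  - intros t Ht. apply in_seq in Ht.
    unfold y. fold (P (M - t)%nat). fold (P (M - t - 1)%nat).
    replace (M - t - 1)%nat with (M - S t)%nat by lia.
    assert (E : RtoC (falling_coef M (S t)) =
                Copp (Cmult (RtoC (falling_coef M t)) (RtoC (INR (M - t))))).
    { rewrite <- RtoC_mult, falling_coef_S by lia. unfold RtoC, Copp. simpl. f_equal; ring. }
    change (Lmap (rmulL W (false :: repeat false t)) (eis s0)) with (X (S t)).
    fold (X t). rewrite E. ring.
Qed.

Definition fcore (qb rr : list nat) (s : R) : C :=
  Csum (map (fun j => Cmult (RtoC (Ccoef qb j))
                 (Cmult (Cpow (Cmult Ci (RtoC s)) (lsum qb - lsum j)) (Lmap (wjr j rr) (eis s))))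
            (prec_set qb)).

Lemma fcore_nil s : fcore [] [] s = RtoC 1.
Proof. unfold fcore. simpl. unfold Lmap, Ccoef. simpl. ring. Qed.

Lemma fcore_snoc qb rr x y s : length qb = length rr ->
  fcore (qb ++ [x]) (rr ++ [y]) s =
  Csum (map (fun j => Cmult (RtoC (Ccoef qb j))
                (antideriv_sum (lsum qb + x - lsum j) (shuffleL (wjr j rr) (e1sh y)) s)) (prec_set qb)).
Proof.
  intros L. unfold fcore. rewrite Csum_prec_set_snoc. apply Csum_ext. intros j Hj.
  destruct (In_prec_set j qb Hj) as [Lj _].
  unfold antideriv_sum. rewrite <- Csum_scal_l. apply Csum_ext. intros t Ht.
  rewrite Ccoef_snoc, !lsum_snoc, wjr_snoc by lia.
  rewrite Nat.sub_add_distr. unfold falling_coef. rewrite RtoC_mult. ring.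
Qed.

Lemma is_derive_fcore_snoc qb rr x y s0 : length qb = length rr ->
  (rr = [] -> (1 <= y)%nat) -> (rr <> [] -> (1 <= hd 0%nat rr)%nat) -> 0 < s0 < 2 * PI ->
  is_derive (fcore (qb ++ [x]) (rr ++ [y])) s0
    (Cmult Ci (Cmult (Cpow (Cmult Ci (RtoC s0)) x)
       (Cmult (Cpow (Li [1%nat] (eis s0)) y) (fcore qb rr s0)))).
Proof.
  intros L Hy Hh Hs.
  assert (HU : forall j, In j (prec_set qb) ->
            forall u, In u (wjr j rr) -> in_H1 u /\ (u <> [] \/ (1 <= y)%nat)).
  { intros j Hj u Hu. destruct (In_prec_set j qb Hj) as [Lj _].
    destruct rr as [|r0 rr'].
    - destruct j; [|simpl in Lj, L; lia]. destruct Hu as [<-|[]]. simpl. auto.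
    - destruct (proper_wjr j (r0 :: rr') ltac:(congruence) ltac:(discriminate) (Hh ltac:(discriminate)) u Hu).
      auto. }
  eapply is_derive_ext; [intros s; symmetry; apply fcore_snoc; auto|].
  eapply is_derive_Cval.
  { apply is_derive_Csum. intros j Hj.
    apply is_derive_Cscal, is_derive_antideriv_sum; [apply proper_shuffleL_e1sh, HU, Hj|exact Hs]. }
  unfold fcore. rewrite <- !Csum_scal_l. apply Csum_ext. intros j Hj.
  destruct (In_prec_set j qb Hj) as [Lj Pj].
  assert (Hl := precb_lsum j qb Lj Pj).
  replace (lsum qb + x - lsum j)%nat with (x + (lsum qb - lsum j))%nat by lia.
  rewrite Cpow_add_r, Lmap_shuffleL.
  - rewrite Lmap_e1sh by exact Hs. ring.
  - intros u Hu. apply (HU j Hj u Hu).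
  - intros v Hv. apply (In_e1sh y v Hv).
  - exact Hs.
Qed.

Lemma lead0_le l : (lead0 l <= length l)%nat.
Proof. induction l as [|a l IH]; simpl; [lia|]. destruct a; simpl; lia. Qed.

Lemma lead0_app_lt l1 l2 : (lead0 l1 < length l1)%nat -> lead0 (l1 ++ l2) = lead0 l1.
Proof.
  induction l1 as [|a l1 IH]; simpl; intros H; [lia|].
  destruct a; simpl in *; auto. rewrite IH by lia. reflexivity.
Qed.

Lemma lead0_app_eq l1 l2 : lead0 l1 = length l1 -> lead0 (l1 ++ l2) = (length l1 + lead0 l2)%nat.
Proof.
  induction l1 as [|a l1 IH]; simpl; intros H; auto.
  destruct a; simpl in *; [|lia]. rewrite IH by lia. reflexivity.
Qed.

Lemma skipn_lead0 l : (lead0 l < length l)%nat ->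
  exists a rest, skipn (lead0 l) l = a :: rest /\ (1 <= a)%nat.
Proof.
  induction l as [|a l IH]; simpl; intros H; [lia|].
  destruct a as [|a]; simpl in *; [apply IH; lia|]. exists (S a), l. split; auto. lia.
Qed.

Lemma qbar_lsum q r : (lead0 r < length q)%nat -> lsum (qbar q r) = (lsum q + lead0 r)%nat.
Proof.
  intros H. unfold qbar. rewrite <- (firstn_skipn (lead0 r) q) at 2. rewrite lsum_app.
  assert (Hl : length (skipn (lead0 r) q) = (length q - lead0 r)%nat) by apply length_skipn.
  destruct (skipn (lead0 r) q) as [|x rest]; [simpl in Hl; lia|].
  unfold lsum. simpl. fold (lsum rest). lia.
Qed.

Lemma qbar_length q r : (lead0 r < length q)%nat -> length (qbar q r) = (length q - lead0 r)%nat.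
Proof.
  intros H. unfold qbar.
  assert (Hl : length (skipn (lead0 r) q) = (length q - lead0 r)%nat) by apply length_skipn.
  destruct (skipn (lead0 r) q) as [|x rest]; [simpl in Hl; lia|]. simpl in *. lia.
Qed.

Lemma fqr_fcore q r s : (lead0 r < length q)%nat ->
  fqr q r s = Cmult (RtoC (Bcoef (firstn (lead0 r) q))) (fcore (qbar q r) (skipn (lead0 r) r) s).
Proof.
  intros H. unfold fqr, fcore. f_equal. apply Csum_ext. intros j Hj.
  rewrite qbar_lsum by auto. reflexivity.
Qed.

Lemma fqr_all_zero q r s : lead0 r = length q -> length q = length r ->
  fqr q r s = Cmult (RtoC (Bcoef q)) (Cpow (Cmult Ci (RtoC s)) (lsum q + length q)).
Proof.
  intros H L. unfold fqr, qbar. rewrite H, skipn_all2, (skipn_all2 r), firstn_all2 by lia.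
  simpl. unfold Lmap, Ccoef. simpl. rewrite Nat.sub_0_r.
  (* [Defs.Ci] and Coquelicot's [Ci] are both [(0, 1)] *)
  change Defs.Ci with Ci. ring.
Qed.

Section Snoc.

Variables (q' r' : list nat) (qn rn : nat) (s : R).
Hypotheses (L : length q' = length r') (Hs : 0 < s < 2 * PI).

Lemma is_derive_fqr_nonzero_prefix : (lead0 r' < length r')%nat ->
  is_derive (fqr (q' ++ [qn]) (r' ++ [rn])) s
    (Cmult Ci (Cmult (Cpow (Cmult Ci (RtoC s)) qn)
       (Cmult (Cpow (Li [1%nat] (eis s)) rn) (fqr q' r' s)))).
Proof.
  intros Hk. set (k := lead0 r') in *.
  assert (Ek : lead0 (r' ++ [rn]) = k) by (apply lead0_app_lt; auto).
  assert (Hqb : qbar (q' ++ [qn]) (r' ++ [rn]) = qbar q' r' ++ [qn]).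
  { unfold qbar. rewrite Ek. fold k. rewrite skipn_snoc_le, firstn_snoc_le by lia.
    assert (Hl : length (skipn k q') = (length q' - k)%nat) by apply length_skipn.
    destruct (skipn k q') as [|x rest]; [simpl in Hl; lia|]. reflexivity. }
  destruct (skipn_lead0 r' Hk) as [a [rest [Ea Ha]]]. fold k in Ea.
  eapply is_derive_ext; [intros t; symmetry; apply fqr_fcore; rewrite length_app; simpl; lia|].
  rewrite Ek, Hqb, firstn_snoc_le, skipn_snoc_le by lia.
  eapply is_derive_Cval.
  { apply is_derive_Cscal, is_derive_fcore_snoc; auto.
    - rewrite qbar_length, length_skipn by lia. fold k. lia.
    - rewrite Ea. discriminate.
    - intros _. rewrite Ea. auto. }
  rewrite (fqr_fcore q' r') by lia. fold k. ring.
Qed.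

Lemma is_derive_fqr_zero_prefix : lead0 r' = length r' -> (1 <= rn)%nat ->
  is_derive (fqr (q' ++ [qn]) (r' ++ [rn])) s
    (Cmult Ci (Cmult (Cpow (Cmult Ci (RtoC s)) qn)
       (Cmult (Cpow (Li [1%nat] (eis s)) rn) (fqr q' r' s)))).
Proof.
  intros Hk Hrn. set (k := length r') in *.
  assert (E1 : lead0 (r' ++ [rn]) = k).
  { rewrite lead0_app_eq by auto. destruct rn; [lia|]. simpl. lia. }
  eapply is_derive_ext; [intros t; symmetry; apply fqr_fcore; rewrite E1, length_app; simpl; lia|].
  rewrite E1, firstn_snoc_le, firstn_all2, skipn_snoc_le, skipn_all2 by lia.
  assert (Hqb : qbar (q' ++ [qn]) (r' ++ [rn]) = [] ++ [(lsum q' + k + qn)%nat]).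
  { unfold qbar. rewrite E1, skipn_snoc_le, skipn_all2, firstn_snoc_le, firstn_all2 by lia.
    reflexivity. }
  rewrite Hqb.
  eapply is_derive_Cval.
  { apply is_derive_Cscal, is_derive_fcore_snoc; auto. intros H; contradiction. }
  rewrite fcore_nil, fqr_all_zero by lia.
  replace (lsum q' + k + qn)%nat with (qn + (lsum q' + length q'))%nat by (unfold k; lia).
  rewrite Cpow_add_r. ring.
Qed.

Lemma is_derive_fqr_all_zero : lead0 r' = length r' ->
  is_derive (fqr (q' ++ [qn]) (r' ++ [0%nat])) s
    (Cmult Ci (Cmult (Cpow (Cmult Ci (RtoC s)) qn)
       (Cmult (Cpow (Li [1%nat] (eis s)) 0) (fqr q' r' s)))).
Proof.
  intros Hk.
  eapply is_derive_ext.
  { intros t. symmetry. apply fqr_all_zero; [|rewrite !length_app; simpl; lia].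
    rewrite lead0_app_eq, length_app by auto. simpl. lia. }
  eapply is_derive_Cval; [apply is_derive_Cscal, is_derive_Ci_pow|].
  rewrite fqr_all_zero, Bcoef_snoc, lsum_snoc, length_app by lia. simpl length.
  set (N := (lsum q' + qn + S (length q'))%nat).
  replace (lsum q' + qn + (length q' + 1))%nat with N by (unfold N; lia).
  replace (N - 1)%nat with (qn + (lsum q' + length q'))%nat by (unfold N; lia).
  rewrite Cpow_add_r.
  assert (HN : / INR N * INR N = 1) by (field; apply not_0_INR; unfold N; lia).
  transitivity (Cmult (RtoC (Bcoef q' * (/ INR N * INR N)))
                  (Cmult Ci (Cmult (Cpow (Cmult Ci (RtoC s)) qn)
                                   (Cpow (Cmult Ci (RtoC s)) (lsum q' + length q'))))).
  - rewrite !RtoC_mult. ring.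
  - rewrite HN, Rmult_1_r. simpl Cpow. ring.
Qed.

End Snoc.

Theorem proposition1 (q r : list nat) :
  length q = length r -> (1 <= length q)%nat ->
  forall s : R, 0 < s < 2 * PI ->
  is_derive (fqr q r) s
    (Cmult Ci
      (Cmult (Cpow (Cmult Ci (RtoC s)) (List.last q 0%nat))
        (Cmult (Cpow (Li (1%nat :: nil) (eis s)) (List.last r 0%nat))
               (fqr (List.removelast q) (List.removelast r) s)))).
Proof.
  intros L Hn s Hs.
  destruct (exists_last (l := q)) as [q' [qn ->]]; [destruct q; simpl in Hn; [lia|discriminate]|].
  destruct (exists_last (l := r)) as [r' [rn ->]]; [destruct r; simpl in L, Hn; [lia|discriminate]|].
  rewrite !last_last, !removelast_last.
  rewrite !length_app in L. simpl in L. assert (L' : length q' = length r') by lia.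
  destruct (Nat.lt_ge_cases (lead0 r') (length r')) as [Hk|Hk].
  - apply is_derive_fqr_nonzero_prefix; auto.
  - assert (Hk' : lead0 r' = length r') by (assert (H := lead0_le r'); lia).
    destruct rn as [|rn].
    + apply is_derive_fqr_all_zero; auto.
    + apply is_derive_fqr_zero_prefix; auto. lia.
Qed.
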